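(* Let $0\le\underline{\tau}<\overline{\tau}<\infty$, $\gamma\ge0$, $\delta\ge0$, let $f$ be a piecewise continuous probability density supported on $[\underline{\tau},\overline{\tau}]$, and let $\beta:[0,\infty)\to(0,\infty)$ be continuous and decreasing with $\lim_{x\to+\infty}\beta(x)=0$ and $x\mapsto x\beta(x)$ Lipschitz. Consider the system $$x'(t)=-\big(\delta+\beta(x(t))\big)x(t)+2\int_{\underline{\tau}}^{\overline{\tau}}e^{-\gamma\tau}f(\tau)\beta(x(t-\tau))x(t-\tau)\,d\tau,$$ $$y'(t)=-\gamma y(t)+\beta(x(t))x(t)-\int_{\underline{\tau}}^{\overline{\tau}}e^{-\gamma\tau}f(\tau)\beta(x(t-\tau))x(t-\tau)\,d\tau,$$ with nonnegative continuous initial data, whose trivial equilibrium is $E_0=(0,0)$. Then $E_0$ is globally asymptotically stable if $$\left(2\int_{\underline{\tau}}^{\overline{\tau}}e^{-\gamma\tau}f(\tau)d\tau-1\right)\beta(0)<\delta,$$ and unstable if $$\delta<\left(2\int_{\underline{\tau}}^{\overline{\tau}}e^{-\gamma\tau}f(\tau)d\tau-1\right)\beta(0).$$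
   Context: The system describes the total resting population $x$ and proliferating population $y$ of hematopoietic stem cells; for solutions arising from the model, $y(t)=\int_{\underline{\tau}}^{\overline{\tau}}f(\tau)\int_{t-\tau}^{t}e^{-\gamma(t-s)}\beta(x(s))x(s)\,ds\,d\tau$ for $t\ge\overline{\tau}$, so $y$ is determined by the history of $x$. Global asymptotic stability is understood with respect to nonnegative continuous initial functions. *)

From Stdlib Require Import Reals Lra List.
From Coquelicot Require Import Coquelicot.
Open Scope R_scope.

Definition piecewise_continuous (f : R -> R) (a b : R) : Prop :=
  exists l : list R,
    (2 <= length l)%nat /\
    nth 0 l 0 = a /\ last l 0 = b /\
    (forall i, (S i < length l)%nat -> nth i l 0 < nth (S i) l 0) /\
    (forall i, (S i < length l)%nat ->
       (forall t, nth i l 0 < t < nth (S i) l 0 -> continuous f t) /\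
       (exists la, filterlim f (at_right (nth i l 0)) (locally la)) /\
       (exists lb, filterlim f (at_left (nth (S i) l 0)) (locally lb))).

Definition pc_density (f : R -> R) (tl tu : R) : Prop :=
  piecewise_continuous f tl tu /\
  (forall s, 0 <= f s) /\
  (forall s, s < tl \/ tu < s -> f s = 0) /\
  RInt f tl tu = 1.

Definition delayed_term (tl tu g : R) (f beta x : R -> R) (t : R) : R :=
  RInt (fun s => exp (- g * s) * f s * (beta (x (t - s)) * x (t - s))) tl tu.

Definition y_formula (tl tu g : R) (f beta x : R -> R) (t : R) : R :=
  RInt (fun s => f s * RInt (fun r => exp (- g * (t - r)) * (beta (x r) * x r)) (t - s) t)
       tl tu.

(* (x, y) is a solution of the model with nonnegative continuous initial data
   (x, y restricted to [-tu, 0]), defined on [-tu, +oo). *)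
Definition is_solution (tl tu g d : R) (f beta x y : R -> R) : Prop :=
  (forall t, - tu <= t -> 0 <= x t) /\
  (forall t, - tu <= t <= 0 -> 0 <= y t) /\
  (forall t, - tu <= t ->
     filterlim x (within (fun s => - tu <= s) (locally t)) (locally (x t))) /\
  (forall t, - tu <= t ->
     filterlim y (within (fun s => - tu <= s) (locally t)) (locally (y t))) /\
  (forall t, 0 < t ->
     is_derive x t (- (d + beta (x t)) * x t + 2 * delayed_term tl tu g f beta x t)) /\
  (forall t, 0 < t ->
     is_derive y t (- g * y t + beta (x t) * x t - delayed_term tl tu g f beta x t)) /\
  (* solutions arising from the model: y is determined by the history of x *)
  (forall t, tu <= t -> y t = y_formula tl tu g f beta x t).

Definition E0_stable (tl tu g d : R) (f beta : R -> R) : Prop :=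
  forall eps, 0 < eps -> exists eta, 0 < eta /\
    forall x y, is_solution tl tu g d f beta x y ->
      (forall s, - tu <= s <= 0 -> Rabs (x s) < eta /\ Rabs (y s) < eta) ->
      forall t, 0 <= t -> Rabs (x t) < eps /\ Rabs (y t) < eps.

Definition E0_attractive (tl tu g d : R) (f beta : R -> R) : Prop :=
  forall x y, is_solution tl tu g d f beta x y ->
    is_lim x p_infty 0 /\ is_lim y p_infty 0.

Definition E0_GAS (tl tu g d : R) (f beta : R -> R) : Prop :=
  E0_stable tl tu g d f beta /\ E0_attractive tl tu g d f beta.

Definition E0_unstable (tl tu g d : R) (f beta : R -> R) : Prop :=
  ~ E0_stable tl tu g d f beta.

From Stdlib Require Import Reals Lra Lia List Factorial Classical_Prop.
From Coquelicot Require Import Coquelicot.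
Open Scope R_scope.

(* With K = int_tl^tu e^(-g s) f(s) ds, the functional
     W(t) = x(t) + 2 int_tl^tu e^(-g s) f(s) int_(t-s)^t beta(x(r)) x(r) dr ds
   satisfies W' = x ((2K - 1) beta(x) - d) along solutions, and
   x(t) <= W(t) <= x(t) + 2 tu beta(0) max_[t-tu, t] x.
   If (2K - 1) beta(0) < d, then W is nonincreasing, which bounds x in terms of its history
   (stability); moreover W' <= -c x for some c > 0 while W >= 0 and x is Lipschitz, so x -> 0
   by a Barbalat-type argument, and y, which is controlled by the last tu units of x, follows.
   If d < (2K - 1) beta(0), then W' >= c x as long as x stays small.  A solution with small
   positive constant history (built by Picard iteration) that stayed small would have W
   increasing from W(0) >= x(0) > 0 while x -> 0, forcing W -> 0. *)


(* Coquelicot states these for abstract normed modules; the versions below unify with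
   expressions over [R] and state [RInt] equalities in [R], so that [ring] and [lra] apply. *)

Lemma ball_R (x e y : R) : ball x e y <-> Rabs (y - x) < e.
Proof. reflexivity. Qed.

Lemma continuous_Rplus (u v : R -> R) x :
  continuous u x -> continuous v x -> continuous (fun y => u y + v y) x.
Proof. intros; apply (continuous_plus u v); auto. Qed.

Lemma continuous_Rminus (u v : R -> R) x :
  continuous u x -> continuous v x -> continuous (fun y => u y - v y) x.
Proof. intros; apply (continuous_minus u v); auto. Qed.

Lemma continuous_Rmult (u v : R -> R) x :
  continuous u x -> continuous v x -> continuous (fun y => u y * v y) x.
Proof. intros; apply (continuous_mult u v); auto. Qed.

Lemma continuous_Ropp (u : R -> R) x : continuous u x -> continuous (fun y => - u y) x.
Proof. intros; apply (continuous_opp u); auto. Qed.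

Lemma continuous_Rcomp (u v : R -> R) x :
  continuous u x -> continuous v (u x) -> continuous (fun y => v (u y)) x.
Proof. intros; apply (continuous_comp u v); auto. Qed.

Lemma continuous_Rscal_l (c : R) (u : R -> R) x : continuous u x -> continuous (fun y => c * u y) x.
Proof. intros; apply continuous_Rmult; [apply continuous_const | auto]. Qed.

Lemma continuous_exp_lin (a x : R) : continuous (fun t => exp (a * t)) x.
Proof. apply continuous_exp_comp, continuous_Rscal_l, continuous_id. Qed.

Lemma exp_le_compat a b : a <= b -> exp a <= exp b.
Proof. intros [H | H]; [left; apply exp_increasing, H | rewrite H; apply Rle_refl]. Qed.

Lemma continuous_of_1_lipschitz (h : R -> R) t :
  (forall u, Rabs (h u - h t) <= Rabs (u - t)) -> continuous h t.
Proof.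
  intros H. apply filterlim_locally. intros eps. exists eps. intros y Hy.
  apply ball_R. apply (proj1 (ball_R _ _ _)) in Hy. specialize (H y). lra.
Qed.

Lemma Rmax_l_1_lipschitz a u t : Rabs (Rmax u a - Rmax t a) <= Rabs (u - t).
Proof.
  unfold Rmax; destruct (Rle_dec u a), (Rle_dec t a); unfold Rabs;
    repeat destruct Rcase_abs; lra.
Qed.

Lemma continuous_Rmax_l a x : continuous (fun t => Rmax t a) x.
Proof. apply continuous_of_1_lipschitz. intros; apply Rmax_l_1_lipschitz. Qed.

Lemma continuous_shift (phi : R -> R) t x :
  (forall u, continuous phi u) -> continuous (fun s => phi (t - s)) x.
Proof.
  intros Hc. apply (continuous_Rcomp (fun s => t - s) phi); [|apply Hc].
  apply continuous_Rminus; [apply continuous_const | apply continuous_id].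
Qed.

Lemma continuous_within_of_continuous (h : R -> R) D t :
  continuous h t -> filterlim h (within D (locally t)) (locally (h t)).
Proof.
  intros H P HP. unfold filtermap, within.
  apply (filter_imp (fun x => P (h x))); [auto | apply H, HP].
Qed.

Lemma continuous_within_retract (x m : R -> R) (D : R -> Prop) t :
  (forall u, D (m u)) -> continuous m t ->
  filterlim x (within D (locally (m t))) (locally (x (m t))) -> continuous (fun u => x (m u)) t.
Proof.
  intros HD Hm Hx. eapply filterlim_comp; [|exact Hx].
  intros P HP. apply (filter_imp _ _ (fun u Hu => Hu (HD u)) (Hm _ HP)).
Qed.

Lemma continuity_pt_of_continuous (phi : R -> R) x : continuous phi x -> continuity_pt phi x.
Proof. apply continuity_pt_filterlim. Qed.

Lemma continuous_of_is_derive (J : R -> R) x l : is_derive J x l -> continuous J x.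
Proof. intros H. apply (@ex_derive_continuous R_AbsRing R_NormedModule). exists l; auto. Qed.

Lemma ex_RInt_Rcontinuous (u : R -> R) a b :
  (forall z, Rmin a b <= z <= Rmax a b -> continuous u z) -> ex_RInt u a b.
Proof. exact (@ex_RInt_continuous R_CompleteNormedModule u a b). Qed.

Lemma RInt_Rext (u v : R -> R) a b :
  (forall x, Rmin a b < x < Rmax a b -> u x = v x) -> @eq R (RInt u a b) (RInt v a b).
Proof. exact (@RInt_ext R_CompleteNormedModule u v a b). Qed.

Lemma ex_RInt_Rext (u v : R -> R) a b :
  (forall x, Rmin a b < x < Rmax a b -> u x = v x) -> ex_RInt u a b -> ex_RInt v a b.
Proof. exact (@ex_RInt_ext R_NormedModule u v a b). Qed.

Lemma RInt_Rminus (u v : R -> R) a b : ex_RInt u a b -> ex_RInt v a b ->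
  @eq R (RInt (fun s => u s - v s) a b) (RInt u a b - RInt v a b).
Proof. exact (@RInt_minus R_CompleteNormedModule u v a b). Qed.

Lemma RInt_Rscal (u : R -> R) a b c : ex_RInt u a b ->
  @eq R (RInt (fun s => c * u s) a b) (c * RInt u a b).
Proof. exact (@RInt_scal R_CompleteNormedModule u a b c). Qed.

Lemma ex_RInt_Rscal (u : R -> R) a b c : ex_RInt u a b -> ex_RInt (fun s => c * u s) a b.
Proof. exact (@ex_RInt_scal R_NormedModule u a b c). Qed.

Lemma RInt_Rconst a b c : @eq R (RInt (fun _ => c) a b) ((b - a) * c).
Proof. exact (@RInt_const R_CompleteNormedModule a b c). Qed.

Lemma RInt_Rpoint (u : R -> R) a : @eq R (RInt u a a) 0.
Proof. exact (@RInt_point R_CompleteNormedModule a u). Qed.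

Lemma RInt_RChasles (u : R -> R) a b c : ex_RInt u a b -> ex_RInt u b c ->
  @eq R (RInt u a b + RInt u b c) (RInt u a c).
Proof. exact (@RInt_Chasles R_CompleteNormedModule u a b c). Qed.

Lemma is_derive_Rplus (u v : R -> R) x du dv :
  is_derive u x du -> is_derive v x dv -> is_derive (fun y => u y + v y) x (du + dv).
Proof. intros; apply (is_derive_plus u v); auto. Qed.

Lemma is_derive_Rminus (u v : R -> R) x du dv :
  is_derive u x du -> is_derive v x dv -> is_derive (fun y => u y - v y) x (du - dv).
Proof. intros; apply (is_derive_minus u v); auto. Qed.

Lemma is_derive_Rmult (u v : R -> R) x du dv : is_derive u x du -> is_derive v x dv ->
  is_derive (fun y => u y * v y) x (du * v x + u x * dv).
Proof. intros; apply (is_derive_mult u v); auto. intros; apply Rmult_comm. Qed.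

Lemma is_derive_Rscal (u : R -> R) x k du : is_derive u x du -> is_derive (fun y => k * u y) x (k * du).
Proof. intros; apply is_derive_scal; auto. Qed.

Lemma is_derive_exp_lin a x : is_derive (fun t => exp (a * t)) x (a * exp (a * x)).
Proof. auto_derive; auto. ring. Qed.

Lemma is_derive_RInt_continuous (u : R -> R) a x :
  (forall t, continuous u t) -> is_derive (fun b => RInt u a b) x (u x).
Proof.
  intros Hu. apply is_derive_RInt with a; [|apply Hu].
  exists (mkposreal 1 Rlt_0_1). intros y _. apply (@RInt_correct R_CompleteNormedModule).
  apply ex_RInt_Rcontinuous; auto.
Qed.

Lemma uniform_continuity_on (phi : R -> R) A B : (forall t, continuous phi t) ->
  forall eps, 0 < eps -> exists del, 0 < del /\ forall p q, A <= p <= B -> A <= q <= B ->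
    Rabs (p - q) < del -> Rabs (phi p - phi q) < eps.
Proof.
  intros Hc eps He.
  destruct (Heine phi (fun c => A <= c <= B) (compact_P3 A B)
              (fun x _ => continuity_pt_of_continuous phi x (Hc x)) (mkposreal eps He)) as [del Hd].
  exists del. split; [apply cond_pos | intros; apply Hd; auto].
Qed.

Lemma RInt_abs_le_of_le (G K : R -> R) a b : a <= b ->
  (forall t, continuous G t) -> (forall t, continuous K t) ->
  (forall r, a <= r <= b -> Rabs (G r) <= K r) -> Rabs (RInt G a b) <= RInt K a b.
Proof.
  intros Hab HG HK Hb. eapply Rle_trans; [apply abs_RInt_le; auto; apply ex_RInt_Rcontinuous; auto|].
  apply RInt_le; auto.
  - apply ex_RInt_Rcontinuous. intros; apply continuous_Rabs_comp; auto.
  - apply ex_RInt_Rcontinuous; auto.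
  - intros r Hr. apply Hb. lra.
Qed.

(** * Integration against piecewise continuous kernels *)

Definition extend_by_limits (f : R -> R) a b la lb t :=
  if Rle_dec t a then la else if Rle_dec b t then lb else f t.

Lemma extend_by_limits_continuous (f : R -> R) a b la lb z : a < b ->
  (forall t, a < t < b -> continuous f t) ->
  filterlim f (at_right a) (locally la) -> filterlim f (at_left b) (locally lb) ->
  a <= z <= b -> continuous (extend_by_limits f a b la lb) z.
Proof.
  intros Hab Hc Hla Hlb Hz. unfold extend_by_limits.
  destruct (Req_dec z a) as [->|Hza]; [|destruct (Req_dec z b) as [->|Hzb]].
  - apply filterlim_locally. intros eps.
    destruct (proj1 (filterlim_locally _ _) Hla eps) as [del Hdel].
    assert (Hp : 0 < Rmin del (b - a)) by (apply Rmin_pos; [apply cond_pos | lra]).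
    exists (mkposreal _ Hp). intros y Hy. apply (proj1 (ball_R _ _ _)) in Hy. simpl in Hy.
    pose proof (Rmin_l del (b - a)). pose proof (Rmin_r del (b - a)). apply Rabs_def2 in Hy.
    destruct (Rle_dec a a); [|lra]. destruct (Rle_dec y a); [apply ball_center|].
    destruct (Rle_dec b y); [lra|]. apply Hdel; [apply ball_R, Rabs_def1|]; lra.
  - apply filterlim_locally. intros eps.
    destruct (proj1 (filterlim_locally _ _) Hlb eps) as [del Hdel].
    assert (Hp : 0 < Rmin del (b - a)) by (apply Rmin_pos; [apply cond_pos | lra]).
    exists (mkposreal _ Hp). intros y Hy. apply (proj1 (ball_R _ _ _)) in Hy. simpl in Hy.
    pose proof (Rmin_l del (b - a)). pose proof (Rmin_r del (b - a)). apply Rabs_def2 in Hy.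
    destruct (Rle_dec b a); [lra|]. destruct (Rle_dec b b); [|lra].
    destruct (Rle_dec y a); [lra|]. destruct (Rle_dec b y); [apply ball_center|].
    apply Hdel; [apply ball_R, Rabs_def1|]; lra.
  - apply (continuous_ext_loc _ f); [|apply Hc; lra].
    assert (Hp : 0 < Rmin (z - a) (b - z)) by (apply Rmin_pos; lra).
    exists (mkposreal _ Hp). intros y Hy. apply (proj1 (ball_R _ _ _)) in Hy. simpl in Hy.
    pose proof (Rmin_l (z - a) (b - z)). pose proof (Rmin_r (z - a) (b - z)). apply Rabs_def2 in Hy.
    destruct (Rle_dec y a); [lra|]. destruct (Rle_dec b y); [lra|]. reflexivity.
Qed.

Lemma ex_RInt_piece_mult (f phi : R -> R) a b la lb : a < b ->
  (forall t, a < t < b -> continuous f t) ->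
  filterlim f (at_right a) (locally la) -> filterlim f (at_left b) (locally lb) ->
  (forall t, continuous phi t) -> ex_RInt (fun s => f s * phi s) a b.
Proof.
  intros Hab Hc Hla Hlb Hphi.
  apply (ex_RInt_ext (fun s => extend_by_limits f a b la lb s * phi s)).
  - intros x Hx. rewrite Rmin_left, Rmax_right in Hx by lra. unfold extend_by_limits.
    destruct (Rle_dec x a); [lra|]. destruct (Rle_dec b x); [lra|]. reflexivity.
  - apply ex_RInt_Rcontinuous. intros z Hz. rewrite Rmin_left, Rmax_right in Hz by lra.
    apply continuous_Rmult; [apply extend_by_limits_continuous; auto | apply Hphi].
Qed.

Lemma last_nth_pred {A : Type} (l : list A) (x : A) : l <> nil -> last l x = nth (pred (length l)) l x.
Proof.
  induction l as [|a l IH]; intros Hl; [congruence|].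
  destruct l as [|b l]; [reflexivity|].
  change (last (b :: l) x = nth (length l) (b :: l) x). apply IH. discriminate.
Qed.

Lemma ex_RInt_piecewise_mult (f phi : R -> R) a b :
  piecewise_continuous f a b -> (forall t, continuous phi t) -> ex_RInt (fun s => f s * phi s) a b.
Proof.
  intros [l [Hlen [H0 [Hlast [Hinc Hpc]]]]] Hphi.
  assert (Hj : forall j, (1 <= j < length l)%nat ->
            ex_RInt (fun s => f s * phi s) (nth 0 l 0) (nth j l 0)).
  { induction j as [|j IH]; intros Hj; [lia|].
    destruct (Hpc j ltac:(lia)) as [Hc [[la Hla] [lb Hlb]]].
    assert (Hp : ex_RInt (fun s => f s * phi s) (nth j l 0) (nth (S j) l 0)).
    { apply (ex_RInt_piece_mult f phi _ _ la lb); auto. apply Hinc; lia. }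
    destruct j as [|j]; [exact Hp|].
    apply (ex_RInt_Chasles _ _ (nth (S j) l 0)); auto. apply IH. lia. }
  rewrite <- H0, <- Hlast, last_nth_pred by (intros ->; simpl in Hlen; lia).
  apply Hj. lia.
Qed.

Definition kernel_on (k : R -> R) (a b : R) : Prop :=
  (forall s, 0 <= k s) /\
  (forall phi, (forall t, continuous phi t) -> ex_RInt (fun s => k s * phi s) a b).

Lemma kernel_on_pc_density f a b : pc_density f a b -> kernel_on f a b.
Proof. intros [Hpc [Hpos _]]. split; auto. intros phi Hphi. apply ex_RInt_piecewise_mult; auto. Qed.

Section Kernel.
Variables (k : R -> R) (a b : R).
Hypotheses (Hk : kernel_on k a b) (Hab : a <= b).

Lemma kernel_on_mul_l (w : R -> R) :
  (forall t, continuous w t) -> (forall s, 0 <= w s) -> kernel_on (fun s => w s * k s) a b.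
Proof.
  intros Hw Hw0. destruct Hk as [Hp Hi]. split.
  - intros s. apply Rmult_le_pos; auto.
  - intros phi Hphi. apply (ex_RInt_Rext (fun s => k s * (w s * phi s))); [intros; ring|].
    apply Hi. intros; apply continuous_Rmult; auto.
Qed.

Lemma kernel_ex_RInt phi : (forall t, continuous phi t) -> ex_RInt (fun s => k s * phi s) a b.
Proof. apply Hk. Qed.

Lemma kernel_ex_RInt_self : ex_RInt k a b.
Proof.
  apply (ex_RInt_Rext (fun s => k s * 1)); [intros; ring|].
  apply kernel_ex_RInt. intros; apply continuous_const.
Qed.

Lemma kernel_RInt_ge0 : 0 <= RInt k a b.
Proof. apply RInt_ge_0; auto. apply kernel_ex_RInt_self. intros; apply Hk. Qed.

Lemma kernel_RInt_const c : RInt (fun s => k s * c) a b = c * RInt k a b.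
Proof. rewrite <- RInt_Rscal by apply kernel_ex_RInt_self. apply RInt_Rext. intros; ring. Qed.

Lemma kernel_RInt_le phi1 phi2 : (forall t, continuous phi1 t) -> (forall t, continuous phi2 t) ->
  (forall s, a <= s <= b -> phi1 s <= phi2 s) ->
  RInt (fun s => k s * phi1 s) a b <= RInt (fun s => k s * phi2 s) a b.
Proof.
  intros H1 H2 Hle. apply RInt_le; auto; try (apply kernel_ex_RInt; auto).
  intros x Hx. apply Rmult_le_compat_l; [apply Hk | apply Hle; lra].
Qed.

Lemma kernel_RInt_ge0_mult phi : (forall t, continuous phi t) ->
  (forall s, a <= s <= b -> 0 <= phi s) -> 0 <= RInt (fun s => k s * phi s) a b.
Proof.
  intros Hc Hle. apply Rle_trans with (RInt (fun s => k s * 0) a b).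
  - rewrite kernel_RInt_const. lra.
  - apply kernel_RInt_le; auto. intros; apply continuous_const.
Qed.

Lemma kernel_RInt_abs_le phi eta : (forall t, continuous phi t) ->
  (forall s, a <= s <= b -> Rabs (phi s) <= eta) ->
  Rabs (RInt (fun s => k s * phi s) a b) <= eta * RInt k a b.
Proof.
  intros Hc Hb. apply Rabs_le. rewrite Ropp_mult_distr_l, <- !kernel_RInt_const.
  split; apply kernel_RInt_le; auto; try (intros; apply continuous_const);
    intros s Hs; specialize (Hb s Hs); apply Rabs_le_between in Hb; lra.
Qed.

Let scaled_mass_lt eps : 0 < eps -> eps / (RInt k a b + 1) * RInt k a b < eps.
Proof.
  intros He. pose proof kernel_RInt_ge0 as HK.
  apply Rlt_le_trans with (eps / (RInt k a b + 1) * (RInt k a b + 1)).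
  - apply Rmult_lt_compat_l; [apply Rdiv_lt_0_compat|]; lra.
  - right. field. lra.
Qed.

Lemma convolution_continuous phi : (forall t, continuous phi t) ->
  forall t0, continuous (fun t => RInt (fun s => k s * phi (t - s)) a b) t0.
Proof.
  intros Hc t0. apply filterlim_locally. intros eps.
  pose proof kernel_RInt_ge0 as HK. pose proof (cond_pos eps) as He.
  set (e' := eps / (RInt k a b + 1)).
  assert (He' : 0 < e') by (apply Rdiv_lt_0_compat; lra).
  destruct (uniform_continuity_on phi (t0 - b - 1) (t0 - a + 1) Hc e' He') as [del [Hdel Hu]].
  assert (Hp : 0 < Rmin del 1) by (apply Rmin_pos; lra).
  exists (mkposreal _ Hp). intros t Ht. apply (proj1 (ball_R _ _ _)) in Ht. simpl in Ht.
  apply ball_R. pose proof (Rmin_l del 1). pose proof (Rmin_r del 1). apply Rabs_def2 in Ht.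
  rewrite <- RInt_Rminus by (apply kernel_ex_RInt; intros; apply continuous_shift; auto).
  rewrite (RInt_Rext _ (fun s => k s * (phi (t - s) - phi (t0 - s)))) by (intros; ring).
  eapply Rle_lt_trans; [|apply (scaled_mass_lt _ He)].
  apply kernel_RInt_abs_le; [intros; apply continuous_Rminus; apply continuous_shift; auto|].
  intros u Hs. left. apply Hu; try lra. apply Rabs_def1; lra.
Qed.

Lemma convolution_difference_quotient (J J' : R -> R) t0 h :
  (forall u, continuous J u) -> (forall u, continuous J' u) ->
  (RInt (fun s => k s * J (t0 + h - s)) a b - RInt (fun s => k s * J (t0 - s)) a b) / h
    - RInt (fun s => k s * J' (t0 - s)) a b
  = RInt (fun s => k s * ((J (t0 + h - s) - J (t0 - s)) / h - J' (t0 - s))) a b.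
Proof.
  intros HJc HJ'.
  rewrite (RInt_Rext (fun s => k s * ((J (t0 + h - s) - J (t0 - s)) / h - J' (t0 - s)))
    (fun s => / h * (k s * J (t0 + h - s) - k s * J (t0 - s)) - k s * J' (t0 - s)))
    by (intros; unfold Rdiv; ring).
  assert (HkJ : forall t, ex_RInt (fun s => k s * J (t - s)) a b)
    by (intros; apply kernel_ex_RInt; intros; apply continuous_shift; auto).
  assert (Hdiff : ex_RInt (fun s => k s * J (t0 + h - s) - k s * J (t0 - s)) a b).
  { apply (ex_RInt_Rext (fun s => k s * (J (t0 + h - s) - J (t0 - s)))); [intros; ring|].
    apply kernel_ex_RInt. intros; apply continuous_Rminus; apply continuous_shift; auto. }
  rewrite RInt_Rminus, RInt_Rscal, RInt_Rminus; auto.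
  - unfold Rdiv. ring.
  - apply ex_RInt_Rscal, Hdiff.
  - apply kernel_ex_RInt. intros; apply continuous_shift; auto.
Qed.

Lemma convolution_derive (J J' : R -> R) :
  (forall u, is_derive J u (J' u)) -> (forall u, continuous J' u) ->
  forall t0, is_derive (fun t => RInt (fun s => k s * J (t - s)) a b) t0
                       (RInt (fun s => k s * J' (t0 - s)) a b).
Proof.
  intros HJ HJ' t0. apply is_derive_Reals. intros eps Heps.
  assert (HJc : forall u, continuous J u) by (intros u; apply (continuous_of_is_derive J u (J' u)); auto).
  pose proof kernel_RInt_ge0 as HK.
  set (e' := eps / (RInt k a b + 1)).
  assert (He' : 0 < e') by (apply Rdiv_lt_0_compat; lra).
  destruct (uniform_continuity_on J' (t0 - b - 1) (t0 - a + 1) HJ' e' He') as [del [Hdel Hu]].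
  assert (Hp : 0 < Rmin del 1) by (apply Rmin_pos; lra).
  exists (mkposreal _ Hp). intros h Hh0 Hh. simpl in Hh.
  pose proof (Rmin_l del 1). pose proof (Rmin_r del 1). apply Rabs_def2 in Hh.
  assert (Hdiff : forall u, continuous (fun s => J (t0 + h - s) - J (t0 - s)) u)
    by (intros; apply continuous_Rminus; apply continuous_shift; auto).
  rewrite convolution_difference_quotient by auto.
  eapply Rle_lt_trans; [|apply (scaled_mass_lt _ Heps)].
  apply kernel_RInt_abs_le.
  - intros u. apply continuous_Rminus; [|apply continuous_shift; auto].
    apply continuous_Rmult; [apply Hdiff | apply continuous_const].
  - intros s Hs.
    destruct (MVT_gen J (t0 - s) (t0 + h - s) J') as [c [Hc HcE]];
      [intros; auto | intros; apply continuity_pt_of_continuous; auto|].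
    replace ((J (t0 + h - s) - J (t0 - s)) / h - J' (t0 - s)) with (J' c - J' (t0 - s))
      by (rewrite HcE; field; auto).
    left. unfold Rmin, Rmax in Hc. destruct (Rle_dec (t0 - s) (t0 + h - s));
      apply Hu; try lra; apply Rabs_def1; lra.
Qed.

End Kernel.

(** * Monotonicity and a Barbalat-type lemma *)

Lemma derive_nonpos_le (F : R -> R) a b : a <= b -> (forall x, a <= x <= b -> continuous F x) ->
  (forall x, a < x < b -> exists l, is_derive F x l /\ l <= 0) -> F b <= F a.
Proof.
  intros Hab Hc Hd.
  destruct (MVT_gen F a b (fun x => Rmin (Derive F x) 0)) as [c [_ Hc2]].
  - intros x Hx. rewrite Rmin_left, Rmax_right in Hx by lra.
    destruct (Hd x Hx) as [l [Hl Hl0]].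
    rewrite (is_derive_unique F x l Hl), Rmin_left by lra. auto.
  - intros x Hx. rewrite Rmin_left, Rmax_right in Hx by lra.
    apply continuity_pt_of_continuous, Hc, Hx.
  - pose proof (Rmin_r (Derive F c) 0).
    assert (Rmin (Derive F c) 0 * (b - a) <= 0) by (apply Rmult_le_0_r; lra). lra.
Qed.

Lemma derive_nonneg_le (F : R -> R) a b : a <= b -> (forall x, a <= x <= b -> continuous F x) ->
  (forall x, a < x < b -> exists l, is_derive F x l /\ 0 <= l) -> F a <= F b.
Proof.
  intros Hab Hc Hd. cut (- F b <= - F a); [lra|].
  apply (derive_nonpos_le (fun x => - F x)); auto.
  - intros; apply continuous_Ropp; auto.
  - intros x Hx. destruct (Hd x Hx) as [l [Hl Hl0]]. exists (- l).
    split; [apply (is_derive_opp F), Hl | lra].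
Qed.

Lemma eq_of_derive_zero (F : R -> R) a b : a <= b -> (forall x, a <= x <= b -> continuous F x) ->
  (forall x, a < x < b -> is_derive F x 0) -> F a = F b.
Proof.
  intros Hab Hc Hd. apply Rle_antisym;
    [apply derive_nonneg_le | apply derive_nonpos_le]; auto;
    intros u Hu; exists 0; split; [apply Hd; auto | lra | apply Hd; auto | lra].
Qed.

Lemma RInt_le_of_derive_le (x P : R -> R) c t1 t2 : t1 <= t2 ->
  (forall t, continuous x t) -> (forall t, t1 <= t <= t2 -> continuous P t) ->
  (forall u, t1 < u < t2 -> exists l, is_derive P u l /\ l <= - c * x u) ->
  c * RInt x t1 t2 <= P t1 - P t2.
Proof.
  intros Ht Hx HP HPd.
  assert (H : P t2 + c * RInt x t1 t2 <= P t1 + c * RInt x t1 t1).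
  { apply (derive_nonpos_le (fun u => P u + c * RInt x t1 u)); auto.
    - intros u Hu. apply continuous_Rplus; [apply HP; auto|].
      apply continuous_Rscal_l, (continuous_of_is_derive _ _ _ (is_derive_RInt_continuous x t1 u Hx)).
    - intros u Hu. destruct (HPd u Hu) as [l [Hl Hl0]]. exists (l + c * x u). split; [|lra].
      apply is_derive_Rplus, is_derive_Rscal, is_derive_RInt_continuous; auto. }
  rewrite RInt_Rpoint in H. lra.
Qed.

Lemma RInt_ge_of_lipschitz (x : R -> R) B t0 s eps : 0 <= B -> 0 < eps ->
  (forall t, continuous x t) ->
  (forall s t, t0 <= s -> t0 <= t -> Rabs (x t - x s) <= B * Rabs (t - s)) ->
  t0 <= s -> eps <= x s ->
  eps / (2 * B + 1) * (eps / 2) <= RInt x s (s + eps / (2 * B + 1)).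
Proof.
  intros HB Heps Hxc Hlip Hs Hxs. set (del := eps / (2 * B + 1)).
  assert (Hdel : 0 < del) by (apply Rdiv_lt_0_compat; lra).
  assert (HBd : B * del < eps / 2).
  { apply Rmult_lt_reg_r with (2 * B + 1); [lra|].
    replace (B * del * (2 * B + 1)) with (B * eps) by (unfold del; field; lra). nra. }
  replace (del * (eps / 2)) with (RInt (fun _ => eps / 2) s (s + del)) by (rewrite RInt_Rconst; lra).
  apply RInt_le; [lra | apply ex_RInt_const | apply ex_RInt_Rcontinuous; auto |].
  intros u Hu. specialize (Hlip s u Hs ltac:(lra)). apply Rabs_le_between in Hlip.
  rewrite Rabs_right in Hlip by lra.
  assert (B * (u - s) <= B * del) by (apply Rmult_le_compat_l; lra). lra.
Qed.

(* Barbalat-type argument: every visit of [x] above [eps] costs [P] a fixed amount, since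
   [x] is Lipschitz, and [P] cannot decrease indefinitely. *)
Lemma eventually_lt_of_lyapunov (x P : R -> R) c B m t0 : 0 < c -> 0 <= B ->
  (forall t, continuous x t) -> (forall t, t0 <= t -> 0 <= x t) ->
  (forall s t, t0 <= s -> t0 <= t -> Rabs (x t - x s) <= B * Rabs (t - s)) ->
  (forall t, t0 <= t -> continuous P t) ->
  (forall u, t0 < u -> exists l, is_derive P u l /\ l <= - c * x u) ->
  (forall t, t0 <= t -> m <= P t) ->
  forall eps, 0 < eps -> exists T, forall t, T <= t -> x t < eps.
Proof.
  intros Hc HB Hxc Hx0 Hlip HPc HPd Hm eps Heps.
  assert (HP : forall t1 t2, t0 <= t1 <= t2 -> c * RInt x t1 t2 <= P t1 - P t2).
  { intros t1 t2 Ht. apply RInt_le_of_derive_le; [lra | auto | intros; apply HPc; lra |].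
    intros; apply HPd; lra. }
  apply NNPP. intros Hno.
  assert (Hbig : forall T, exists t, T <= t /\ eps <= x t).
  { intros T. apply NNPP. intros Hn. apply Hno. exists T. intros t Ht.
    apply Rnot_le_lt. intros Hle. apply Hn. exists t. auto. }
  set (del := eps / (2 * B + 1)).
  assert (Hdel : 0 < del) by (apply Rdiv_lt_0_compat; lra).
  set (a := c * (del * (eps / 2))).
  assert (Ha : 0 < a) by (apply Rmult_lt_0_compat; [|apply Rmult_lt_0_compat]; lra).
  assert (Hn : forall n : nat, exists t, t0 <= t /\ INR n * a <= P t0 - P t).
  { induction n as [|n [t [Ht1 Ht2]]]; [exists t0; split; simpl; lra|].
    destruct (Hbig t) as [s [Hs1 Hs2]]. exists (s + del). split; [lra|].
    assert (0 <= c * RInt x t s).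
    { apply Rmult_le_pos; [lra|]. apply RInt_ge_0; auto.
      apply ex_RInt_Rcontinuous; auto. intros; apply Hx0; lra. }
    assert (a <= c * RInt x s (s + del)).
    { apply Rmult_le_compat_l; [lra | apply (RInt_ge_of_lipschitz x B t0); auto; lra]. }
    pose proof (HP t s ltac:(lra)). pose proof (HP s (s + del) ltac:(lra)).
    rewrite S_INR. lra. }
  destruct (INR_archimed a (P t0 - m) Ha) as [n Hna].
  destruct (Hn n) as [t [Ht1 Ht2]]. specialize (Hm t Ht1). lra.
Qed.

Lemma nonneg_of_derive_nonneg_at_neg (x F : R -> R) :
  (forall t, continuous x t) -> (forall t, t <= 0 -> 0 <= x t) ->
  (forall t, 0 < t -> is_derive x t (F t)) -> (forall t, 0 < t -> x t < 0 -> 0 <= F t) ->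
  forall t, 0 <= x t.
Proof.
  intros Hxc Hneg Hxd HF t.
  destruct (Rle_dec 0 (x t)) as [|Hxt]; auto. exfalso. apply Rnot_le_lt in Hxt.
  assert (Ht : 0 < t) by (destruct (Rle_lt_dec t 0); [specialize (Hneg t r); lra | auto]).
  set (Ev := fun s => 0 <= s <= t /\ 0 <= x s).
  destruct (completeness Ev) as [m [Hub Hlub]].
  { exists t. intros s [Hs _]. lra. }
  { exists 0. split; [lra | apply Hneg; lra]. }
  assert (Hm0 : 0 <= m) by (apply Hub; split; [lra | apply Hneg; lra]).
  assert (Hmt : m <= t) by (apply Hlub; intros s [Hs _]; lra).
  assert (Hxm : 0 <= x m).
  { destruct (Rle_dec 0 (x m)) as [|Hn]; auto. exfalso. apply Rnot_le_lt in Hn.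
    destruct (proj1 (filterlim_locally _ _) (Hxc m) (mkposreal (- x m) ltac:(lra))) as [del Hdel].
    assert (Hd := cond_pos del).
    assert (Hup : is_upper_bound Ev (m - del / 2)).
    { intros s [Hs1 Hs2]. destruct (Rle_dec s (m - del / 2)); auto. exfalso.
      assert (s <= m) by (apply Hub; split; auto).
      assert (Hb : ball m del s) by (apply ball_R, Rabs_def1; lra).
      specialize (Hdel s Hb). apply (proj1 (ball_R _ _ _)) in Hdel. simpl in Hdel.
      apply Rabs_def2 in Hdel. lra. }
    specialize (Hlub _ Hup). lra. }
  assert (Hneg' : forall u, m < u <= t -> x u < 0).
  { intros u Hu. destruct (Rle_dec 0 (x u)) as [Hp|Hp]; [|lra].
    assert (u <= m) by (apply Hub; split; [lra | auto]). lra. }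
  assert (Hmt' : m < t) by (destruct (Req_dec m t) as [<-|]; lra).
  assert (x m <= x t); [|lra].
  apply derive_nonneg_le; [lra | intros; apply Hxc|].
  intros u Hu. exists (F u). split; [apply Hxd; lra | apply HF; [lra | apply Hneg'; lra]].
Qed.

Lemma is_lim_zero_of_eventually (h : R -> R) :
  (forall eps, 0 < eps -> exists T, forall t, T <= t -> Rabs (h t) < eps) -> is_lim h p_infty 0.
Proof.
  intros H. apply is_lim_spec. intros eps. destruct (H eps (cond_pos eps)) as [T HT].
  exists T. intros t Ht. rewrite Rminus_0_r. apply HT. lra.
Qed.

(** * Picard iteration for causal Lipschitz equations *)

Lemma is_derive_pow_fact (L x : R) n :
  is_derive (fun r => (L * r) ^ S n / INR (fact (S n))) x (L * ((L * x) ^ n / INR (fact n))).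
Proof.
  assert (HL : is_derive (fun r => L * r) x L) by (auto_derive; auto; ring).
  pose proof (is_derive_pow (fun r => L * r) (S n) x L HL) as H. simpl pred in H.
  apply (is_derive_ext (fun r => / INR (fact (S n)) * (L * r) ^ S n)); [intros; apply Rmult_comm|].
  replace (L * ((L * x) ^ n / INR (fact n))) with (/ INR (fact (S n)) * (INR (S n) * L * (L * x) ^ n)).
  - apply (is_derive_scal (fun r => (L * r) ^ S n)), H.
  - rewrite fact_simpl, mult_INR. field. split; [apply INR_fact_neq_0 | apply not_0_INR; lia].
Qed.

Lemma exp_partial_sums_cauchy (z : R) : ex_lim_seq_cauchy (sum_n (fun k => z ^ k / INR (fact k))).
Proof.
  apply ex_lim_seq_cauchy_corr. exists (exp z).
  apply (is_lim_seq_ext (sum_n (fun k => scal (pow_n z k) (/ INR (fact k))))).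
  - intros n. apply sum_n_ext. intros k.
    unfold scal; simpl; unfold mult; simpl. rewrite pow_n_pow. reflexivity.
  - apply is_exp_Reals.
Qed.

Section Picard.
Variables (F : (R -> R) -> R -> R) (Lam c : R).
Hypotheses (HLam : 0 <= Lam) (Hc : 0 <= c)
  (F_cont : forall u, (forall t, continuous u t) -> forall t, continuous (F u) t)
  (F_lip : forall u v r eps, (forall t, continuous u t) -> (forall t, continuous v t) ->
     (forall w, w <= r -> Rabs (u w - v w) <= eps) -> Rabs (F u r - F v r) <= Lam * eps)
  (F_zero : forall r, F (fun _ => 0) r = 0).

(* Fixed points of [picard_step] solve [x' = F x] on [t > 0] with [x = c] on [t <= 0]. *)
Definition picard_step (u : R -> R) (t : R) := c + RInt (F u) 0 (Rmax t 0).

Fixpoint picard (n : nat) : R -> R :=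
  match n with
  | O => fun _ => c
  | S n => picard_step (picard n)
  end.

Definition picard_bound (n : nat) (r : R) := c * (Lam * Rmax r 0) ^ n / INR (fact n).

Lemma picard_continuous n t : continuous (picard n) t.
Proof.
  revert t. induction n as [|n IH]; intros t; [apply continuous_const|].
  apply continuous_Rplus; [apply continuous_const|].
  apply (continuous_Rcomp (fun t => Rmax t 0) (fun b => RInt (F (picard n)) 0 b));
    [apply continuous_Rmax_l|].
  apply (continuous_of_is_derive _ _ _ (is_derive_RInt_continuous _ _ _ (F_cont _ IH))).
Qed.

Lemma picard_nonpos n t : t <= 0 -> picard n t = c.
Proof.
  intros Ht. destruct n; [reflexivity|]. simpl. unfold picard_step.
  rewrite Rmax_right, RInt_Rpoint by lra. ring.
Qed.

Lemma picard_bound_continuous n t : continuous (picard_bound n) t.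
Proof.
  unfold picard_bound, Rdiv. apply continuous_Rmult; [|apply continuous_const].
  apply continuous_Rscal_l.
  apply (continuous_Rcomp (fun r => Lam * Rmax r 0) (fun y => y ^ n)).
  - apply continuous_Rscal_l, continuous_Rmax_l.
  - apply continuity_pt_filterlim, derivable_continuous_pt, derivable_pt_pow.
Qed.

Lemma picard_bound_le n w r : w <= r -> picard_bound n w <= picard_bound n r.
Proof.
  intros Hw. unfold picard_bound, Rdiv. apply Rmult_le_compat_r.
  { left; apply Rinv_0_lt_compat, INR_fact_lt_0. }
  apply Rmult_le_compat_l; auto. apply pow_incr. pose proof (Rmax_r w 0).
  split; [apply Rmult_le_pos; auto|]. apply Rmult_le_compat_l; auto.
  unfold Rmax. destruct (Rle_dec w 0), (Rle_dec r 0); lra.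
Qed.

Lemma RInt_picard_bound n T : 0 <= T ->
  RInt (fun r => Lam * picard_bound n r) 0 T = picard_bound (S n) T.
Proof.
  intros HT. unfold picard_bound at 2. rewrite Rmax_left by lra.
  rewrite (RInt_Rext _ (fun r => c * (Lam * ((Lam * r) ^ n / INR (fact n))))).
  2:{ intros r Hr. rewrite Rmin_left in Hr by lra.
      unfold picard_bound. rewrite Rmax_left by lra. unfold Rdiv. ring. }
  apply is_RInt_unique.
  replace (c * (Lam * T) ^ S n / INR (fact (S n))) with
    (minus (c * ((Lam * T) ^ S n / INR (fact (S n)))) (c * ((Lam * 0) ^ S n / INR (fact (S n)))))
    by (rewrite Rmult_0_r, pow_i by lia; unfold minus, plus, opp; simpl; unfold Rdiv; ring).
  apply (@is_RInt_derive R_CompleteNormedModule (fun r => c * ((Lam * r) ^ S n / INR (fact (S n))))).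
  - intros; apply is_derive_Rscal, is_derive_pow_fact.
  - intros x _. apply continuous_Rscal_l, continuous_Rscal_l. unfold Rdiv.
    apply continuous_Rmult; [|apply continuous_const].
    apply (continuous_Rcomp (fun r => Lam * r) (fun y => y ^ n)).
    + apply continuous_Rscal_l, continuous_id.
    + apply continuity_pt_filterlim, derivable_continuous_pt, derivable_pt_pow.
Qed.

Lemma picard_step_dist (b u v : R -> R) t :
  (forall t, continuous b t) -> (forall w r, w <= r -> b w <= b r) ->
  (forall t, continuous u t) -> (forall t, continuous v t) -> (forall w, Rabs (u w - v w) <= b w) ->
  Rabs (picard_step u t - picard_step v t) <= RInt (fun r => Lam * b r) 0 (Rmax t 0).
Proof.
  intros Hbc Hbm Hu Hv Huv. unfold picard_step.
  replace (c + RInt (F u) 0 (Rmax t 0) - (c + RInt (F v) 0 (Rmax t 0)))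
    with (RInt (F u) 0 (Rmax t 0) - RInt (F v) 0 (Rmax t 0)) by ring.
  rewrite <- RInt_Rminus by (apply ex_RInt_Rcontinuous; intros; apply F_cont; auto).
  apply RInt_abs_le_of_le; [apply Rmax_r | intros; apply continuous_Rminus; apply F_cont; auto
    | intros; apply continuous_Rscal_l; auto |].
  intros r _. apply F_lip; auto. intros w Hw. eapply Rle_trans; [apply Huv | apply Hbm, Hw].
Qed.

Lemma picard_bound_pos_part n t : picard_bound n (Rmax t 0) = picard_bound n t.
Proof.
  unfold picard_bound. replace (Rmax (Rmax t 0) 0) with (Rmax t 0); [reflexivity|].
  symmetry. apply Rmax_left, Rmax_r.
Qed.

Lemma picard_succ_dist n t : Rabs (picard (S n) t - picard n t) <= picard_bound (S n) t.
Proof.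
  revert t. induction n as [|n IH]; intros t;
    rewrite <- picard_bound_pos_part, <- RInt_picard_bound by apply Rmax_r.
  - assert (H0 : picard_step (fun _ => 0) t = c).
    { unfold picard_step. rewrite (RInt_Rext (F (fun _ => 0)) (fun _ => 0)), RInt_Rconst
        by (intros; apply F_zero). ring. }
    replace (picard 1 t - picard 0 t)
      with (picard_step (fun _ => c) t - picard_step (fun _ => 0) t) by (rewrite H0; reflexivity).
    apply picard_step_dist; [apply picard_bound_continuous | apply picard_bound_le
      | intros; apply continuous_const | intros; apply continuous_const |].
    intros w. unfold picard_bound. simpl. rewrite Rminus_0_r, Rabs_right by lra. lra.
  - apply picard_step_dist; [apply picard_bound_continuous | apply picard_bound_le
      | intros; apply (picard_continuous (S n)) | intros; apply (picard_continuous n) | apply IH].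
Qed.



Lemma picard_dist T n p t : 0 <= T -> t <= T ->
  Rabs (picard (n + p) t - picard n t) <=
  c * (sum_n (fun k => (Lam * T) ^ k / INR (fact k)) (n + p)
       - sum_n (fun k => (Lam * T) ^ k / INR (fact k)) n).
Proof.
  intros HT Ht. induction p as [|p IH].
  - rewrite Nat.add_0_r, !Rminus_eq_0, Rabs_R0. lra.
  - rewrite Nat.add_succ_r, sum_Sn.
    replace (picard (S (n + p)) t - picard n t) with
      ((picard (S (n + p)) t - picard (n + p) t) + (picard (n + p) t - picard n t)) by ring.
    eapply Rle_trans; [apply Rabs_triang|].
    assert (picard_bound (S (n + p)) t <= c * ((Lam * T) ^ S (n + p) / INR (fact (S (n + p))))).
    { eapply Rle_trans; [apply (picard_bound_le _ _ T Ht)|].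
      unfold picard_bound. rewrite Rmax_left by lra. right. unfold Rdiv. ring. }
    pose proof (picard_succ_dist (n + p) t). change (plus ?x ?y) with (x + y). lra.
Qed.

Lemma picard_uniform_cauchy T : 0 <= T -> forall eps, 0 < eps ->
  exists N, forall n p t, (N <= n)%nat -> t <= T -> Rabs (picard (n + p) t - picard n t) < eps.
Proof.
  intros HT eps He.
  pose proof (exp_partial_sums_cauchy (Lam * T)) as Hcy.
  destruct (Hcy (mkposreal (eps / (c + 1)) ltac:(apply Rdiv_lt_0_compat; lra))) as [N HN].
  exists N. intros n p t Hn Ht. eapply Rle_lt_trans; [apply (picard_dist T); auto|].
  specialize (HN (n + p)%nat n ltac:(lia) Hn). simpl in HN.
  set (S := sum_n (fun k => (Lam * T) ^ k / INR (fact k))) in *.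
  apply Rle_lt_trans with ((c + 1) * Rabs (S (n + p)%nat - S n)).
  - apply Rle_trans with (c * Rabs (S (n + p)%nat - S n));
      [apply Rmult_le_compat_l; [lra | apply Rle_abs] | apply Rmult_le_compat_r; [apply Rabs_pos | lra]].
  - apply Rlt_le_trans with ((c + 1) * (eps / (c + 1))); [apply Rmult_lt_compat_l; lra|].
    right; field; lra.
Qed.

Definition picard_limit (t : R) := real (Lim_seq (fun n => picard n t)).

Lemma picard_limit_correct t : is_lim_seq (fun n => picard n t) (picard_limit t).
Proof.
  assert (Hcy : ex_lim_seq_cauchy (fun n => picard n t)).
  { intros eps.
    destruct (picard_uniform_cauchy (Rmax t 0) (Rmax_r t 0) eps (cond_pos eps)) as [N HN].
    exists N. intros n m Hn Hm. destruct (Nat.le_gt_cases n m) as [H|H].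
    - replace m with (n + (m - n))%nat by lia. rewrite Rabs_minus_sym. apply HN; auto. apply Rmax_l.
    - replace n with (m + (n - m))%nat by lia. apply HN; auto. apply Rmax_l. }
  apply ex_lim_seq_cauchy_corr, ex_finite_lim_seq_correct in Hcy. destruct Hcy as [He Hf].
  unfold picard_limit. rewrite Hf. apply Lim_seq_correct; auto.
Qed.

Lemma picard_limit_approx T : 0 <= T -> forall eps, 0 < eps ->
  exists N, forall n t, (N <= n)%nat -> t <= T -> Rabs (picard_limit t - picard n t) <= eps.
Proof.
  intros HT eps He.
  destruct (picard_uniform_cauchy T HT (eps / 2) ltac:(lra)) as [N HN].
  exists N. intros n t Hn Ht.
  destruct (proj2 (is_lim_seq_spec _ _) (picard_limit_correct t) (mkposreal (eps / 2) ltac:(lra)))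
    as [N' HN'].
  specialize (HN' (n + N')%nat ltac:(lia)). specialize (HN n N' t Hn Ht). simpl in HN'.
  replace (picard_limit t - picard n t) with
    (- (picard (n + N') t - picard_limit t) + (picard (n + N') t - picard n t)) by ring.
  eapply Rle_trans; [apply Rabs_triang|]. rewrite Rabs_Ropp. lra.
Qed.

Lemma picard_limit_continuous t0 : continuous picard_limit t0.
Proof.
  apply filterlim_locally. intros eps. pose proof (cond_pos eps) as He.
  pose proof (Rmax_r t0 0). pose proof (Rmax_l t0 0).
  destruct (picard_limit_approx (Rmax t0 0 + 1) ltac:(lra) (eps / 3) ltac:(lra)) as [N HN].
  destruct (proj1 (filterlim_locally _ _) (picard_continuous N t0) (mkposreal (eps / 3) ltac:(lra)))
    as [del Hdel].
  assert (Hp : 0 < Rmin del 1) by (apply Rmin_pos; [apply cond_pos | lra]).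
  exists (mkposreal _ Hp). intros t Ht. apply (proj1 (ball_R _ _ _)) in Ht. simpl in Ht.
  pose proof (Rmin_l del 1). pose proof (Rmin_r del 1). apply ball_R.
  specialize (Hdel t ltac:(apply ball_R; lra)). apply (proj1 (ball_R _ _ _)) in Hdel. simpl in Hdel.
  apply Rabs_def2 in Ht.
  pose proof (HN N t (le_n N) ltac:(lra)). pose proof (HN N t0 (le_n N) ltac:(lra)).
  replace (picard_limit t - picard_limit t0) with
    ((picard_limit t - picard N t) + (picard N t - picard N t0) - (picard_limit t0 - picard N t0))
    by ring.
  eapply Rle_lt_trans; [apply Rabs_triang|]. rewrite Rabs_Ropp.
  eapply Rle_lt_trans; [apply Rplus_le_compat_r, Rabs_triang|]. lra.
Qed.

Lemma picard_limit_nonpos t : t <= 0 -> picard_limit t = c.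
Proof.
  intros Ht. unfold picard_limit.
  rewrite (Lim_seq_ext _ (fun _ => c)), Lim_seq_const; [reflexivity|].
  intros n. apply picard_nonpos; auto.
Qed.

Lemma picard_limit_integral t : 0 <= t -> picard_limit t = c + RInt (F picard_limit) 0 t.
Proof.
  intros Ht.
  assert (HFx : forall n, ex_RInt (F (picard n)) 0 t)
    by (intros; apply ex_RInt_Rcontinuous; intros; apply F_cont, picard_continuous).
  assert (HF : ex_RInt (F picard_limit) 0 t)
    by (apply ex_RInt_Rcontinuous; intros; apply F_cont, picard_limit_continuous).
  cut (forall eps, 0 < eps ->
         Rabs (picard_limit t - (c + RInt (F picard_limit) 0 t)) <= eps * (1 + t * Lam)).
  { intros H. apply Rminus_diag_uniq, Rabs_eq_0. apply Rle_antisym; [|apply Rabs_pos].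
    assert (0 <= t * Lam) by (apply Rmult_le_pos; lra).
    apply Rnot_lt_le. intros Hpos.
    specialize (H (Rabs (picard_limit t - (c + RInt (F picard_limit) 0 t)) / (2 * (1 + t * Lam)))
                  ltac:(apply Rdiv_lt_0_compat; lra)).
    replace (_ / (2 * (1 + t * Lam)) * (1 + t * Lam)) with
      (Rabs (picard_limit t - (c + RInt (F picard_limit) 0 t)) / 2) in H by (field; lra).
    lra. }
  intros eps He.
  destruct (picard_limit_approx t Ht eps He) as [N HN].
  pose proof (HN (S N) t ltac:(lia) (Rle_refl t)) as H1.
  change (picard (S N) t) with (c + RInt (F (picard N)) 0 (Rmax t 0)) in H1.
  rewrite Rmax_left in H1 by lra.
  assert (H2 : Rabs (RInt (F (picard N)) 0 t - RInt (F picard_limit) 0 t) <= t * (Lam * eps)).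
  { rewrite <- RInt_Rminus by auto.
    replace (t * (Lam * eps)) with (RInt (fun _ => Lam * eps) 0 t) by (rewrite RInt_Rconst; lra).
    apply RInt_abs_le_of_le; auto; [intros; apply continuous_Rminus; apply F_cont;
      [apply picard_continuous | apply picard_limit_continuous] | intros; apply continuous_const |].
    intros r Hr. apply F_lip; [apply picard_continuous | apply picard_limit_continuous |].
    intros w Hw. rewrite Rabs_minus_sym. apply HN; auto; lra. }
  replace (picard_limit t - (c + RInt (F picard_limit) 0 t)) with
    ((picard_limit t - (c + RInt (F (picard N)) 0 t))
     + (RInt (F (picard N)) 0 t - RInt (F picard_limit) 0 t)) by ring.
  eapply Rle_trans; [apply Rabs_triang|]. nra.
Qed.

Lemma picard_limit_derive t : 0 < t -> is_derive picard_limit t (F picard_limit t).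
Proof.
  intros Ht.
  apply (is_derive_ext_loc (fun u => c + RInt (F picard_limit) 0 u)).
  - exists (mkposreal t Ht). intros y Hy. apply (proj1 (ball_R _ _ _)) in Hy. simpl in Hy.
    apply Rabs_def2 in Hy. rewrite picard_limit_integral by lra. reflexivity.
  - replace (F picard_limit t) with (0 + F picard_limit t) by ring.
    apply is_derive_Rplus; [apply (@is_derive_const R_AbsRing R_NormedModule)|].
    apply is_derive_RInt_continuous. intros; apply F_cont, picard_limit_continuous.
Qed.

End Picard.

(** * The model *)

Section Model.
Variables (tl tu g d : R) (f beta : R -> R).
Hypotheses (Htl : 0 <= tl) (Htlu : tl < tu) (Hg : 0 <= g) (Hd : 0 <= d)
  (Hf : pc_density f tl tu)
  (Hbpos : forall u, 0 <= u -> 0 < beta u)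
  (Hbcont : forall u, 0 <= u ->
     filterlim beta (within (fun s => 0 <= s) (locally u)) (locally (beta u)))
  (Hbdec : forall u v, 0 <= u -> u <= v -> beta v <= beta u).

Definition kern (s : R) := exp (- g * s) * f s.

Definition mass := RInt kern tl tu.

(* Clipping at [0] makes [x beta(x)] globally Lipschitz, so the Picard scheme applies. *)
Definition flux (u : R) := Rmax u 0 * beta (Rmax u 0).

(* [x] is only given on [[-tu, oo)]; clamping makes [hist x] continuous on all of [R]. *)
Definition hist (x : R -> R) (t : R) := x (Rmax t (- tu)).

Definition rate (x : R -> R) (r : R) := flux (hist x r).

Lemma kern_kernel : kernel_on kern tl tu.
Proof.
  apply (kernel_on_mul_l f tl tu (kernel_on_pc_density _ _ _ Hf) (fun s => exp (- g * s))).
  - intros; apply continuous_exp_lin.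
  - intros; left; apply exp_pos.
Qed.

Lemma f_kernel : kernel_on f tl tu.
Proof. apply kernel_on_pc_density, Hf. Qed.

Lemma mass_bounds : 0 <= mass <= 1.
Proof.
  pose proof Hf as (_ & Hf0 & _ & Hf1).
  split; [apply (kernel_RInt_ge0 _ _ _ kern_kernel); lra|].
  rewrite <- Hf1. apply RInt_le; [lra | apply (kernel_ex_RInt_self _ _ _ kern_kernel)
    | apply (kernel_ex_RInt_self _ _ _ f_kernel) |].
  intros s Hs. unfold kern. rewrite <- (Rmult_1_l (f s)) at 2. apply Rmult_le_compat_r; [apply Hf0|].
  rewrite <- exp_0. apply exp_le_compat. nra.
Qed.

Lemma beta0_pos : 0 < beta 0.
Proof. apply Hbpos, Rle_refl. Qed.

Lemma flux_continuous u : continuous flux u.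
Proof.
  apply continuous_Rmult; [apply continuous_Rmax_l|].
  apply (continuous_within_retract beta (fun u => Rmax u 0) (fun s => 0 <= s));
    [intros; apply Rmax_r | apply continuous_Rmax_l | apply Hbcont, Rmax_r].
Qed.

Lemma flux_nonneg u : 0 <= flux u.
Proof. apply Rmult_le_pos; [apply Rmax_r | left; apply Hbpos, Rmax_r]. Qed.

Lemma flux_le u : flux u <= beta 0 * Rmax u 0.
Proof.
  unfold flux. rewrite Rmult_comm. apply Rmult_le_compat_r; [apply Rmax_r|].
  apply Hbdec; [lra | apply Rmax_r].
Qed.

Lemma flux_of_nonneg u : 0 <= u -> flux u = u * beta u.
Proof. intros. unfold flux. rewrite Rmax_left; auto. Qed.

Lemma flux_of_nonpos u : u <= 0 -> flux u = 0.
Proof. intros. unfold flux. rewrite Rmax_right; auto. ring. Qed.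

Lemma hist_eq x t : - tu <= t -> hist x t = x t.
Proof. intros. unfold hist. rewrite Rmax_left; auto. Qed.

Lemma hist_le_of_history x Q : (forall r, - tu <= r <= 0 -> x r <= Q) ->
  forall r, r <= 0 -> hist x r <= Q.
Proof.
  intros HQ r Hr. apply HQ. split; [apply Rmax_r|].
  unfold Rmax. destruct (Rle_dec r (- tu)); lra.
Qed.

Definition trajectory (x : R -> R) : Prop :=
  (forall t, - tu <= t -> 0 <= x t) /\
  (forall t, - tu <= t -> filterlim x (within (fun s => - tu <= s) (locally t)) (locally (x t))).

Section Trajectory.
Variable x : R -> R.
Hypothesis Htr : trajectory x.
Let Hx0 := proj1 Htr.
Let Hxc := proj2 Htr.

Lemma hist_continuous t : continuous (hist x) t.
Proof.
  apply (continuous_within_retract x (fun u => Rmax u (- tu)) (fun s => - tu <= s));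
    [intros; apply Rmax_r | apply continuous_Rmax_l | apply Hxc, Rmax_r].
Qed.

Lemma hist_nonneg r : 0 <= hist x r.
Proof. apply Hx0, Rmax_r. Qed.

Lemma hist_bounded a b : a <= b -> exists Q, 0 <= Q /\ forall r, a <= r <= b -> hist x r <= Q.
Proof.
  intros Hab. destruct (continuity_ab_maj (hist x) a b Hab) as [m [Hm _]].
  { intros; apply continuity_pt_of_continuous, hist_continuous. }
  exists (Rmax (hist x m) 0). split; [apply Rmax_r|].
  intros r Hr. eapply Rle_trans; [apply Hm; auto | apply Rmax_l].
Qed.

Lemma rate_continuous t : continuous (rate x) t.
Proof. apply (continuous_Rcomp (hist x) flux); [apply hist_continuous | apply flux_continuous]. Qed.

Lemma rate_nonneg r : 0 <= rate x r.
Proof. apply flux_nonneg. Qed.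

Lemma rate_le r : rate x r <= beta 0 * hist x r.
Proof. unfold rate. rewrite <- (Rmax_left (hist x r) 0) at 2 by apply hist_nonneg. apply flux_le. Qed.

Lemma rate_eq r : - tu <= r -> rate x r = x r * beta (x r).
Proof. intros. unfold rate. rewrite hist_eq by auto. apply flux_of_nonneg, Hx0; auto. Qed.

Lemma delayed_term_eq t : 0 <= t ->
  delayed_term tl tu g f beta x t = RInt (fun s => kern s * rate x (t - s)) tl tu.
Proof.
  intros Ht. unfold delayed_term. apply RInt_Rext.
  intros s Hs. rewrite Rmin_left, Rmax_right in Hs by lra.
  unfold kern. rewrite rate_eq by lra. ring.
Qed.

Lemma rate_interval_bound Q a b : a <= b -> (forall r, a <= r <= b -> hist x r <= Q) ->
  0 <= RInt (rate x) a b <= (b - a) * (beta 0 * Q).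
Proof.
  intros Hab HQ. assert (Hex : ex_RInt (rate x) a b)
    by (apply ex_RInt_Rcontinuous; intros; apply rate_continuous).
  split; [apply RInt_ge_0; auto; intros; apply rate_nonneg|].
  rewrite <- RInt_Rconst. apply RInt_le; auto; [apply ex_RInt_const|].
  intros r Hr. eapply Rle_trans; [apply rate_le|].
  apply Rmult_le_compat_l; [pose proof beta0_pos; lra | apply HQ; lra].
Qed.

Definition cum (u : R) := RInt (rate x) 0 u.

Definition lyap (t : R) := hist x t + 2 * RInt (fun s => kern s * (cum t - cum (t - s))) tl tu.

Lemma cum_derive u : is_derive cum u (rate x u).
Proof. apply is_derive_RInt_continuous, rate_continuous. Qed.

Lemma cum_continuous u : continuous cum u.
Proof. apply (continuous_of_is_derive _ _ _ (cum_derive u)). Qed.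

Lemma cum_diff t s : cum t - cum (t - s) = RInt (rate x) (t - s) t.
Proof.
  unfold cum. rewrite <- (RInt_RChasles _ 0 (t - s) t); [ring|..];
    apply ex_RInt_Rcontinuous; intros; apply rate_continuous.
Qed.

Lemma lyap_split t : RInt (fun s => kern s * (cum t - cum (t - s))) tl tu
  = mass * cum t - RInt (fun s => kern s * cum (t - s)) tl tu.
Proof.
  unfold mass. rewrite Rmult_comm, <- (kernel_RInt_const _ _ _ kern_kernel), <- RInt_Rminus.
  - apply RInt_Rext. intros; ring.
  - apply (kernel_ex_RInt _ _ _ kern_kernel). intros; apply continuous_const.
  - apply (kernel_ex_RInt _ _ _ kern_kernel). intros; apply continuous_shift, cum_continuous.
Qed.

Lemma lyap_continuous t : continuous lyap t.
Proof.
  unfold lyap. apply continuous_Rplus; [apply hist_continuous|].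
  apply continuous_Rscal_l. apply (continuous_ext (fun t => mass * cum t - RInt (fun s => kern s * cum (t - s)) tl tu)).
  { intros; symmetry; apply lyap_split. }
  apply continuous_Rminus; [apply continuous_Rscal_l, cum_continuous|].
  apply (convolution_continuous _ _ _ kern_kernel); [lra | apply cum_continuous].
Qed.

Lemma lyap_bounds t Q : (forall r, t - tu <= r <= t -> hist x r <= Q) ->
  hist x t <= lyap t <= hist x t + 2 * (tu * (beta 0 * Q)).
Proof.
  intros HQ. pose proof mass_bounds. pose proof beta0_pos.
  assert (HQ0 : 0 <= Q) by (apply Rle_trans with (hist x t); [apply hist_nonneg | apply HQ; lra]).
  assert (Hphi : forall s, tl <= s <= tu -> 0 <= cum t - cum (t - s) <= tu * (beta 0 * Q)).
  { intros s Hs. rewrite cum_diff.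
    destruct (rate_interval_bound Q (t - s) t ltac:(lra)) as [H1 H2]; [intros; apply HQ; lra|].
    split; auto. eapply Rle_trans; [apply H2|]. apply Rmult_le_compat_r; [|lra].
    apply Rmult_le_pos; lra. }
  assert (Hcont : forall u, continuous (fun s => cum t - cum (t - s)) u)
    by (intros; apply continuous_Rminus; [apply continuous_const | apply continuous_shift, cum_continuous]).
  assert (H1 : 0 <= RInt (fun s => kern s * (cum t - cum (t - s))) tl tu)
    by (apply (kernel_RInt_ge0_mult _ _ _ kern_kernel ltac:(lra)); [auto | apply Hphi]).
  assert (H2 : RInt (fun s => kern s * (cum t - cum (t - s))) tl tu <= tu * (beta 0 * Q)).
  { eapply Rle_trans; [apply (kernel_RInt_le _ _ _ kern_kernel ltac:(lra) _ (fun _ => tu * (beta 0 * Q)));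
      [auto | intros; apply continuous_const | apply Hphi]|].
    rewrite (kernel_RInt_const _ _ _ kern_kernel). fold mass.
    rewrite <- (Rmult_1_r (tu * (beta 0 * Q))) at 2.
    apply Rmult_le_compat_l; [apply Rmult_le_pos; [|apply Rmult_le_pos]|]; lra. }
  unfold lyap. lra.
Qed.

Lemma hist_le_lyap t : hist x t <= lyap t.
Proof.
  destruct (hist_bounded (t - tu) t) as [Q [_ HQ]]; [lra|].
  apply (lyap_bounds t Q HQ).
Qed.

Definition wcum (u : R) := RInt (fun r => exp (g * r) * rate x r) 0 u.

(* This form of [y_formula] (see [y_formula_eq_yfun]) can be differentiated. *)
Definition yfun (t : R) := exp (- g * t) * (wcum t - RInt (fun s => f s * wcum (t - s)) tl tu).

Lemma weighted_rate_continuous r : continuous (fun r => exp (g * r) * rate x r) r.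
Proof. apply continuous_Rmult; [apply continuous_exp_lin | apply rate_continuous]. Qed.

Lemma wcum_derive u : is_derive wcum u (exp (g * u) * rate x u).
Proof. apply (is_derive_RInt_continuous (fun r => exp (g * r) * rate x r)), weighted_rate_continuous. Qed.

Lemma wcum_continuous u : continuous wcum u.
Proof. apply (continuous_of_is_derive _ _ _ (wcum_derive u)). Qed.

Lemma yfun_derive t : is_derive yfun t
  (- g * yfun t + rate x t - RInt (fun s => kern s * rate x (t - s)) tl tu).
Proof.
  assert (Hs : exp (- g * t) * RInt (fun s => f s * (exp (g * (t - s)) * rate x (t - s))) tl tu
               = RInt (fun s => kern s * rate x (t - s)) tl tu).
  { rewrite <- RInt_Rscal.
    - apply RInt_Rext. intros s _. unfold kern.
      replace (exp (- g * s)) with (exp (- g * t) * exp (g * (t - s))) by (rewrite <- exp_plus; f_equal; ring).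
      ring.
    - apply (kernel_ex_RInt _ _ _ f_kernel). intros.
      apply (continuous_shift (fun r => exp (g * r) * rate x r)), weighted_rate_continuous. }
  assert (HE : exp (- g * t) * exp (g * t) = 1) by (rewrite <- exp_plus, <- exp_0; f_equal; ring).
  replace (- g * yfun t + rate x t - RInt (fun s => kern s * rate x (t - s)) tl tu) with
    (- g * exp (- g * t) * (wcum t - RInt (fun s => f s * wcum (t - s)) tl tu)
     + exp (- g * t) * (exp (g * t) * rate x t
         - RInt (fun s => f s * (exp (g * (t - s)) * rate x (t - s))) tl tu)).
  - apply (is_derive_Rmult (fun t => exp (- g * t))
      (fun t => wcum t - RInt (fun s => f s * wcum (t - s)) tl tu)); [apply is_derive_exp_lin|].
    apply is_derive_Rminus; [apply wcum_derive|].
    apply (convolution_derive _ _ _ f_kernel ltac:(lra) wcum (fun r => exp (g * r) * rate x r));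
      [apply wcum_derive | apply weighted_rate_continuous].
  - assert (Hr : rate x t = exp (- g * t) * (exp (g * t) * rate x t))
      by (rewrite <- Rmult_assoc, HE; ring).
    unfold yfun. rewrite <- Hs. rewrite Hr at 2. ring.
Qed.

Definition inner (t s : R) := RInt (fun r => exp (- g * (t - r)) * rate x r) (t - s) t.

Lemma inner_eq t s : inner t s = exp (- g * t) * (wcum t - wcum (t - s)).
Proof.
  unfold inner, wcum. rewrite <- (RInt_RChasles _ 0 (t - s) t);
    [|apply ex_RInt_Rcontinuous; intros; apply weighted_rate_continuous..].
  rewrite Rplus_minus_l, <- RInt_Rscal by (apply ex_RInt_Rcontinuous; intros; apply weighted_rate_continuous).
  apply RInt_Rext. intros r _.
  replace (exp (- g * (t - r))) with (exp (- g * t) * exp (g * r)) by (rewrite <- exp_plus; f_equal; ring).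
  ring.
Qed.

Lemma yfun_eq_inner t : yfun t = RInt (fun s => f s * inner t s) tl tu.
Proof.
  pose proof Hf as (_ & _ & _ & Hf1).
  assert (Hc : forall u, continuous (fun s => wcum (t - s)) u)
    by (intros; apply continuous_shift, wcum_continuous).
  rewrite (RInt_Rext _ (fun s => f s * (exp (- g * t) * wcum t) - exp (- g * t) * (f s * wcum (t - s))))
    by (intros; rewrite inner_eq; ring).
  rewrite RInt_Rminus, (kernel_RInt_const _ _ _ f_kernel), Hf1, RInt_Rscal.
  - unfold yfun. ring.
  - apply (kernel_ex_RInt _ _ _ f_kernel), Hc.
  - apply (kernel_ex_RInt _ _ _ f_kernel). intros; apply continuous_const.
  - apply ex_RInt_Rscal, (kernel_ex_RInt _ _ _ f_kernel), Hc.
Qed.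

Lemma inner_bounds t s Q : tl <= s <= tu -> (forall r, t - tu <= r <= t -> hist x r <= Q) ->
  0 <= inner t s <= tu * (beta 0 * Q).
Proof.
  intros Hs HQ. pose proof beta0_pos.
  assert (HQ0 : 0 <= Q) by (apply Rle_trans with (hist x t); [apply hist_nonneg | apply HQ; lra]).
  assert (Hex : ex_RInt (fun r => exp (- g * (t - r)) * rate x r) (t - s) t)
    by (apply ex_RInt_Rcontinuous; intros; apply continuous_Rmult;
        [apply continuous_exp_comp, continuous_Rscal_l, continuous_Rminus;
           [apply continuous_const | apply continuous_id]
        | apply rate_continuous]).
  unfold inner. split.
  - apply RInt_ge_0; [lra | auto |]. intros. apply Rmult_le_pos; [left; apply exp_pos | apply rate_nonneg].
  - apply Rle_trans with (RInt (fun _ => beta 0 * Q) (t - s) t).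
    + apply RInt_le; [lra | auto | apply ex_RInt_const |]. intros r Hr.
      rewrite <- (Rmult_1_l (beta 0 * Q)). apply Rmult_le_compat; [left; apply exp_pos | apply rate_nonneg | |].
      * rewrite <- exp_0. apply exp_le_compat. nra.
      * eapply Rle_trans; [apply rate_le|]. apply Rmult_le_compat_l; [lra | apply HQ; lra].
    + rewrite RInt_Rconst. apply Rmult_le_compat_r; [apply Rmult_le_pos|]; lra.
Qed.

Lemma yfun_bounds t Q : (forall r, t - tu <= r <= t -> hist x r <= Q) ->
  0 <= yfun t <= tu * (beta 0 * Q).
Proof.
  intros HQ. pose proof Hf as (_ & _ & _ & Hf1).
  assert (Hc : forall u, continuous (inner t) u).
  { intros u. apply (continuous_ext (fun s => exp (- g * t) * (wcum t - wcum (t - s))));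
      [intros; symmetry; apply inner_eq|].
    apply continuous_Rscal_l, continuous_Rminus; [apply continuous_const|].
    apply continuous_shift, wcum_continuous. }
  rewrite yfun_eq_inner. split.
  - apply (kernel_RInt_ge0_mult _ _ _ f_kernel ltac:(lra)); auto.
    intros s Hs. apply (inner_bounds t s Q Hs HQ).
  - eapply Rle_trans; [apply (kernel_RInt_le _ _ _ f_kernel ltac:(lra) _ (fun _ => tu * (beta 0 * Q)));
      [auto | intros; apply continuous_const | intros s Hs; apply (inner_bounds t s Q Hs HQ)]|].
    rewrite (kernel_RInt_const _ _ _ f_kernel), Hf1. lra.
Qed.

Lemma y_formula_eq_yfun t : 0 <= t -> y_formula tl tu g f beta x t = yfun t.
Proof.
  intros Ht. rewrite yfun_eq_inner. unfold y_formula. apply RInt_Rext.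
  intros s Hs. rewrite Rmin_left, Rmax_right in Hs by lra. f_equal. apply RInt_Rext.
  intros r Hr. rewrite Rmin_left, Rmax_right in Hr by lra. rewrite rate_eq by lra. ring.
Qed.

Hypothesis Hxd : forall t, 0 < t ->
  is_derive x t (- (d + beta (x t)) * x t + 2 * delayed_term tl tu g f beta x t).

Lemma lyap_derive t : 0 < t -> is_derive lyap t (x t * ((2 * mass - 1) * beta (x t) - d)).
Proof.
  intros Ht.
  apply (is_derive_ext_loc (fun t => x t + 2 * (mass * cum t - RInt (fun s => kern s * cum (t - s)) tl tu))).
  { exists (mkposreal t Ht). intros y Hy. apply (proj1 (ball_R _ _ _)) in Hy. simpl in Hy.
    apply Rabs_def2 in Hy. unfold lyap. rewrite lyap_split, hist_eq by lra. reflexivity. }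
  replace (x t * ((2 * mass - 1) * beta (x t) - d)) with
    ((- (d + beta (x t)) * x t + 2 * delayed_term tl tu g f beta x t)
     + 2 * (mass * rate x t - RInt (fun s => kern s * rate x (t - s)) tl tu))
    by (rewrite delayed_term_eq, rate_eq by lra; ring).
  apply is_derive_Rplus; [apply Hxd, Ht|]. apply is_derive_Rscal, is_derive_Rminus.
  - apply is_derive_Rscal, cum_derive.
  - apply (convolution_derive _ _ _ kern_kernel ltac:(lra) cum (rate x));
      [apply cum_derive | apply rate_continuous].
Qed.

Lemma x_lipschitz M : (forall r, hist x r <= M) ->
  forall s t, 0 < s -> 0 < t -> Rabs (x t - x s) <= (d + 3 * beta 0) * M * Rabs (t - s).
Proof.
  intros HM s t Hs Ht. pose proof beta0_pos. pose proof mass_bounds.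
  assert (HM0 : 0 <= M) by (apply Rle_trans with (hist x 0); [apply hist_nonneg | apply HM]).
  set (dx := fun u => - (d + beta (x u)) * x u + 2 * delayed_term tl tu g f beta x u).
  assert (Hdx : forall u, 0 < u -> Rabs (dx u) <= (d + 3 * beta 0) * M).
  { intros u Hu. unfold dx. rewrite delayed_term_eq by lra.
    assert (Hxu : 0 <= x u <= M) by (rewrite <- (hist_eq x u) by lra; split; [apply hist_nonneg | apply HM]).
    assert (Hbu : 0 < beta (x u) <= beta 0) by (split; [apply Hbpos | apply Hbdec]; lra).
    assert (H1 : Rabs (- (d + beta (x u)) * x u) <= (d + beta 0) * M).
    { rewrite Rabs_mult, Rabs_Ropp, !Rabs_right by lra. apply Rmult_le_compat; lra. }
    assert (H2 : Rabs (RInt (fun s => kern s * rate x (u - s)) tl tu) <= beta 0 * M).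
    { eapply Rle_trans; [apply (kernel_RInt_abs_le _ _ _ kern_kernel ltac:(lra) _ (beta 0 * M))|].
      - intros; apply continuous_shift, rate_continuous.
      - intros r _. rewrite Rabs_right by (apply Rle_ge, rate_nonneg).
        eapply Rle_trans; [apply rate_le | apply Rmult_le_compat_l; [lra | apply HM]].
      - fold mass. rewrite <- (Rmult_1_r (beta 0 * M)) at 2.
        apply Rmult_le_compat_l; [apply Rmult_le_pos|]; lra. }
    eapply Rle_trans; [apply Rabs_triang|]. rewrite (Rabs_mult 2), (Rabs_right 2) by lra. lra. }
  destruct (MVT_gen x s t dx) as [c [Hc HcE]].
  - intros u Hu. apply Hxd. unfold Rmin in Hu; destruct (Rle_dec s t); lra.
  - intros u Hu. apply continuity_pt_of_continuous, (continuous_of_is_derive x u (dx u)), Hxd.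
    unfold Rmin in Hu; destruct (Rle_dec s t); lra.
  - rewrite HcE, Rabs_mult. apply Rmult_le_compat_r; [apply Rabs_pos | apply Hdx].
    unfold Rmin in Hc; destruct (Rle_dec s t); lra.
Qed.

Lemma hist_eventually_lt P c m M : 0 < c -> (forall r, hist x r <= M) ->
  (forall t, 0 <= t -> continuous P t) ->
  (forall u, 0 < u -> exists l, is_derive P u l /\ l <= - c * x u) ->
  (forall t, 0 <= t -> m <= P t) ->
  forall eps, 0 < eps -> exists T, forall t, T <= t -> hist x t < eps.
Proof.
  intros Hc HM HPc HPd Hm. pose proof beta0_pos.
  assert (HM0 : 0 <= M) by (apply Rle_trans with (hist x 0); [apply hist_nonneg | apply HM]).
  apply (eventually_lt_of_lyapunov (hist x) P c ((d + 3 * beta 0) * M) m 1); auto.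
  - apply Rmult_le_pos; lra.
  - apply hist_continuous.
  - intros; apply hist_nonneg.
  - intros s t Hs Ht. rewrite !hist_eq by lra. apply x_lipschitz; auto; lra.
  - intros; apply HPc; lra.
  - intros u Hu. rewrite hist_eq by lra. apply HPd. lra.
  - intros; apply Hm; lra.
Qed.

End Trajectory.

Lemma growth_rate_near_zero c1 : c1 < (2 * mass - 1) * beta 0 - d ->
  exists eps0, 0 < eps0 /\ forall v, 0 <= v <= eps0 -> c1 <= (2 * mass - 1) * beta v - d.
Proof.
  intros Hc1. set (k := 2 * mass - 1) in *. set (gap := k * beta 0 - d - c1).
  assert (Hgap : 0 < gap) by (unfold gap; lra).
  assert (Hq : 0 < gap / (Rabs k + 1)) by (apply Rdiv_lt_0_compat; pose proof (Rabs_pos k); lra).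
  destruct (proj1 (filterlim_locally _ _) (Hbcont 0 (Rle_refl 0)) (mkposreal _ Hq)) as [rho Hrho].
  pose proof (cond_pos rho). exists (rho / 2). split; [lra|].
  intros v Hv. specialize (Hrho v ltac:(apply ball_R, Rabs_def1; lra) (proj1 Hv)).
  apply (proj1 (ball_R _ _ _)) in Hrho. simpl in Hrho.
  assert (Hdiff : Rabs (k * beta v - k * beta 0) < gap).
  { rewrite <- Rmult_minus_distr_l, Rabs_mult.
    apply Rle_lt_trans with (Rabs k * (gap / (Rabs k + 1)));
      [apply Rmult_le_compat_l; [apply Rabs_pos | lra]|].
    apply Rlt_le_trans with ((Rabs k + 1) * (gap / (Rabs k + 1))); [apply Rmult_lt_compat_r; lra|].
    right. field. pose proof (Rabs_pos k). lra. }
  apply Rabs_def2 in Hdiff. unfold gap in *. lra.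
Qed.

Lemma solution_trajectory x y : is_solution tl tu g d f beta x y -> trajectory x.
Proof. intros Hs. split; apply Hs. Qed.

Section Solution.
Variables x y : R -> R.
Hypothesis Hsol : is_solution tl tu g d f beta x y.

Let Htr := solution_trajectory x y Hsol.
Let Hx0 := proj1 Htr.
Let Hxd : forall t, 0 < t ->
  is_derive x t (- (d + beta (x t)) * x t + 2 * delayed_term tl tu g f beta x t).
Proof. apply Hsol. Qed.

(* [y] and [yfun x] solve the same linear equation on [t > 0] and agree for [t >= tu]. *)
Lemma y_eq_yfun t : 0 < t -> y t = yfun x t.
Proof.
  pose proof Hsol as (_ & _ & _ & _ & _ & Hyd & Hyf).
  assert (Hlate : forall t, tu <= t -> y t = yfun x t)
    by (intros; rewrite Hyf, y_formula_eq_yfun by (auto; lra); reflexivity).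
  intros Ht. destruct (Rle_lt_dec tu t) as [|Htu]; [apply Hlate; auto|].
  set (z := fun u => (y u - yfun x u) * exp (g * u)).
  assert (Hzd : forall u, 0 < u -> is_derive z u 0).
  { intros u Hu. replace 0 with ((- g * y u + beta (x u) * x u - delayed_term tl tu g f beta x u
        - (- g * yfun x u + rate x u - RInt (fun s => kern s * rate x (u - s)) tl tu)) * exp (g * u)
        + (y u - yfun x u) * (g * exp (g * u)))
      by (rewrite delayed_term_eq, rate_eq by (auto; lra); ring).
    apply (is_derive_Rmult (fun u => y u - yfun x u) (fun u => exp (g * u)));
      [|apply is_derive_exp_lin].
    apply is_derive_Rminus; [apply Hyd, Hu | apply yfun_derive; auto]. }
  assert (Hz : z t = z tu).
  { apply eq_of_derive_zero; [lra | | intros; apply Hzd; lra].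
    intros u Hu. apply (continuous_of_is_derive z u 0), Hzd. lra. }
  unfold z in Hz. rewrite (Hlate tu), Rminus_eq_0, Rmult_0_l in Hz by lra.
  apply Rmult_integral in Hz. destruct Hz as [Hz|Hz]; [lra|].
  pose proof (exp_pos (g * t)). lra.
Qed.

Lemma lyap_nonincreasing t1 t2 : (forall v, 0 <= v -> (2 * mass - 1) * beta v <= d) ->
  0 <= t1 <= t2 -> lyap x t2 <= lyap x t1.
Proof.
  intros Hsg Ht. apply derive_nonpos_le; [lra | intros; apply lyap_continuous; auto|].
  intros u Hu. eexists. split; [apply lyap_derive; auto; lra|].
  apply Rmult_le_0_l; [apply Hx0; lra|]. specialize (Hsg (x u) ltac:(apply Hx0; lra)). lra.
Qed.

Lemma hist_le_max Q0 : (forall v, 0 <= v -> (2 * mass - 1) * beta v <= d) ->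
  (forall r, r <= 0 -> hist x r <= Q0) -> forall r, hist x r <= Rmax Q0 (lyap x 0).
Proof.
  intros Hsg HQ0 r. destruct (Rle_lt_dec r 0).
  - eapply Rle_trans; [apply HQ0; auto | apply Rmax_l].
  - eapply Rle_trans; [apply hist_le_lyap; auto|].
    apply Rle_trans with (lyap x 0); [apply lyap_nonincreasing; auto; lra | apply Rmax_r].
Qed.

Lemma limits_of_hist_small :
  (forall eps, 0 < eps -> exists T, forall t, T <= t -> hist x t < eps) ->
  is_lim x p_infty 0 /\ is_lim y p_infty 0.
Proof.
  intros Hsmall. pose proof beta0_pos.
  assert (Htb : 0 <= tu * beta 0) by (apply Rmult_le_pos; lra).
  split; apply is_lim_zero_of_eventually; intros eps Heps.
  - destruct (Hsmall eps Heps) as [T HT]. exists (Rmax T 0). intros t Ht.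
    pose proof (Rmax_l T 0). pose proof (Rmax_r T 0).
    rewrite Rabs_right, <- (hist_eq x t) by (try apply Rle_ge, Hx0; lra). apply HT. lra.
  - set (e := eps / (tu * beta 0 + 1)).
    assert (He : 0 < e) by (apply Rdiv_lt_0_compat; lra).
    assert (Hee : e * (tu * beta 0 + 1) = eps) by (unfold e; field; lra).
    destruct (Hsmall e He) as [T HT]. exists (Rmax T 0 + tu). intros t Ht.
    pose proof (Rmax_l T 0). pose proof (Rmax_r T 0).
    rewrite y_eq_yfun by lra.
    destruct (yfun_bounds x Htr t e) as [Hy1 Hy2]; [intros; left; apply HT; lra|].
    rewrite Rabs_right; nra.
Qed.

(* Where the growth rate is positive, the Lyapunov functional increases while [x]
   is forced to decay, so [x] cannot stay there forever. *)
Lemma solution_escapes c1 eps0 : 0 < c1 ->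
  (forall v, 0 <= v <= eps0 -> c1 <= (2 * mass - 1) * beta v - d) -> 0 < x 0 ->
  ~ (forall t, 0 <= t -> x t <= eps0).
Proof.
  intros Hc1 Hgrowth Hx00 Hconf. pose proof beta0_pos.
  assert (Htb : 0 <= tu * beta 0) by (apply Rmult_le_pos; lra).
  destruct (hist_bounded x Htr (- tu) 0) as [Q0 [_ HQ0]]; [lra|].
  set (M := Rmax Q0 eps0).
  assert (HM : forall r, hist x r <= M).
  { intros r. destruct (Rle_lt_dec r 0).
    - apply Rle_trans with Q0; [|apply Rmax_l]. apply hist_le_of_history; auto.
      intros s Hs. rewrite <- (hist_eq x s) by lra. apply HQ0; auto.
    - rewrite hist_eq by lra. apply Rle_trans with eps0; [apply Hconf; lra | apply Rmax_r]. }
  assert (Hup : forall u, 0 < u -> c1 * x u <= x u * ((2 * mass - 1) * beta (x u) - d)).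
  { intros u Hu. pose proof (Hx0 u ltac:(lra)). pose proof (Hconf u ltac:(lra)).
    specialize (Hgrowth (x u) ltac:(lra)). nra. }
  set (e := x 0 / (2 * (1 + 2 * (tu * beta 0)))).
  assert (He : 0 < e) by (apply Rdiv_lt_0_compat; lra).
  assert (He2 : e * (2 * (1 + 2 * (tu * beta 0))) = x 0) by (unfold e; field; lra).
  destruct (hist_eventually_lt x Htr Hxd (fun t => - lyap x t) c1 (- (M + 2 * (tu * (beta 0 * M)))) M
              Hc1 HM) with e as [T HT]; auto.
  - intros; apply continuous_Ropp, lyap_continuous; auto.
  - intros u Hu. exists (- (x u * ((2 * mass - 1) * beta (x u) - d))).
    split; [apply (is_derive_opp (lyap x)), lyap_derive; auto|]. pose proof (Hup u Hu). lra.
  - intros t _. destruct (lyap_bounds x Htr t M) as [_ Hub]; [intros; apply HM|].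
    pose proof (HM t). lra.
  - set (ts := Rmax T 0 + tu). pose proof (Rmax_l T 0). pose proof (Rmax_r T 0).
    assert (Hlate : lyap x ts <= (1 + 2 * (tu * beta 0)) * e).
    { destruct (lyap_bounds x Htr ts e) as [_ Hub]; [intros; left; apply HT; unfold ts in *; lra|].
      pose proof (HT ts ltac:(unfold ts; lra)). nra. }
    assert (Hearly : x 0 <= lyap x ts).
    { rewrite <- (hist_eq x 0) by lra. eapply Rle_trans; [apply hist_le_lyap; auto|].
      apply derive_nonneg_le; [unfold ts; lra | intros; apply lyap_continuous; auto|].
      intros u Hu. eexists. split; [apply lyap_derive; auto; lra|].
      pose proof (Hx0 u ltac:(lra)). pose proof (Hup u ltac:(lra)). nra. }
    nra.
Qed.

End Solution.

Lemma E0_stable_of_sign : (forall v, 0 <= v -> (2 * mass - 1) * beta v <= d) ->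
  E0_stable tl tu g d f beta.
Proof.
  intros Hsg eps Heps. pose proof beta0_pos.
  assert (Htb : 0 <= tu * beta 0) by (apply Rmult_le_pos; lra).
  set (C := 1 + 2 * (tu * beta 0)).
  set (eta := eps / (2 * (C + tu * beta 0 * C))).
  assert (HC : 1 <= C) by (unfold C; lra).
  assert (Heta : eta * (2 * (C + tu * beta 0 * C)) = eps) by (unfold eta; field; nra).
  assert (Heta0 : 0 < eta) by (unfold eta; apply Rdiv_lt_0_compat; nra).
  assert (HCeta : C * eta < eps) by nra.
  assert (HYeta : tu * (beta 0 * (C * eta)) < eps) by nra.
  exists eta. split; auto. intros x y Hs Hinit t Ht.
  pose proof (solution_trajectory x y Hs) as Htr. pose proof (proj1 Htr) as Hx0.
  assert (Hhist : forall r, r <= 0 -> hist x r <= eta).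
  { apply hist_le_of_history. intros r Hr. destruct (Hinit r Hr) as [H1 _].
    apply Rabs_def2 in H1. lra. }
  assert (Hall : forall r, hist x r <= C * eta).
  { intros r. eapply Rle_trans; [apply (hist_le_max x y Hs eta Hsg Hhist)|].
    apply Rmax_lub; [nra|].
    destruct (lyap_bounds x Htr 0 eta) as [_ H2]; [intros; apply Hhist; lra|].
    pose proof (Hhist 0 (Rle_refl 0)). unfold C. lra. }
  split.
  - rewrite Rabs_right, <- (hist_eq x t) by (try apply Rle_ge, Hx0; lra).
    eapply Rle_lt_trans; [apply Hall | auto].
  - destruct (Req_dec t 0) as [->|Ht0].
    { destruct (Hinit 0) as [_ H0]; [lra|]. nra. }
    rewrite (y_eq_yfun x y Hs t) by lra.
    destruct (yfun_bounds x Htr t (C * eta)) as [H1 H2]; [intros; apply Hall|].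
    rewrite Rabs_right; lra.
Qed.

Lemma sign_condition : (2 * mass - 1) * beta 0 < d ->
  forall v, 0 <= v -> (2 * mass - 1) * beta v <= d.
Proof.
  intros Hc v Hv. pose proof (Hbdec 0 v (Rle_refl 0) Hv). pose proof (Hbpos v Hv).
  destruct (Rle_dec 0 (2 * mass - 1)).
  - assert ((2 * mass - 1) * beta v <= (2 * mass - 1) * beta 0) by (apply Rmult_le_compat_l; auto). lra.
  - assert ((2 * mass - 1) * beta v <= 0) by (apply Rmult_le_0_r; lra). lra.
Qed.

Lemma decay_rate_on M : (2 * mass - 1) * beta 0 < d -> 0 <= M ->
  exists c, 0 < c /\ forall v, 0 <= v <= M -> (2 * mass - 1) * beta v - d <= - c.
Proof.
  intros Hcond HM0. set (k := 2 * mass - 1) in *.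
  exists (d - Rmax (k * beta 0) (k * beta M)). split.
  - apply Rlt_0_minus, Rmax_lub_lt; auto. destruct (Rle_dec 0 k).
    + assert (k * beta M <= k * beta 0) by (apply Rmult_le_compat_l; [|apply Hbdec]; lra). lra.
    + assert (0 < beta M) by (apply Hbpos; lra). nra.
  - intros v Hv. pose proof (Hbdec 0 v ltac:(lra) ltac:(lra)). pose proof (Hbdec v M ltac:(lra) ltac:(lra)).
    destruct (Rle_dec 0 k).
    + assert (k * beta v <= k * beta 0) by (apply Rmult_le_compat_l; auto).
      pose proof (Rmax_l (k * beta 0) (k * beta M)). lra.
    + assert (k * beta v <= k * beta M) by (apply Rmult_le_compat_neg_l; lra).
      pose proof (Rmax_r (k * beta 0) (k * beta M)). lra.
Qed.

Lemma E0_attractive_of : (2 * mass - 1) * beta 0 < d -> E0_attractive tl tu g d f beta.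
Proof.
  intros Hcond x y Hs. apply (limits_of_hist_small x y Hs).
  pose proof (solution_trajectory x y Hs) as Htr. pose proof Hs as (_ & _ & _ & _ & Hxd & _).
  destruct (hist_bounded x Htr (- tu) 0) as [Q0 [_ HQ0]]; [lra|].
  set (M := Rmax Q0 (lyap x 0)).
  assert (HM : forall r, hist x r <= M).
  { apply (hist_le_max x y Hs Q0 (sign_condition Hcond)). apply hist_le_of_history.
    intros r Hr. rewrite <- (hist_eq x r) by lra. apply HQ0; auto. }
  assert (HM0 : 0 <= M) by (apply Rle_trans with (hist x 0); [apply hist_nonneg | apply HM]; auto).
  destruct (decay_rate_on M Hcond HM0) as [c [Hc Hdecay]].
  apply (hist_eventually_lt x Htr Hxd (lyap x) c 0 M Hc HM).
  - intros; apply lyap_continuous; auto.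
  - intros u Hu. eexists. split; [apply lyap_derive; auto|].
    assert (Hxu : 0 <= x u <= M)
      by (rewrite <- (hist_eq x u) by lra; split; [apply hist_nonneg; auto | apply HM]).
    specialize (Hdecay (x u) Hxu). nra.
  - intros t _. apply Rle_trans with (hist x t); [apply hist_nonneg | apply hist_le_lyap]; auto.
Qed.

Section Instability.
Variable L : R.
Hypothesis HL : forall u v, 0 <= u -> 0 <= v -> Rabs (u * beta u - v * beta v) <= L * Rabs (u - v).

Definition rhs (u : R -> R) (r : R) :=
  - d * u r - flux (u r) + 2 * RInt (fun s => kern s * flux (u (r - s))) tl tu.

Let Lf := Rmax L 0.
Let Lam := d + 3 * Lf.

Lemma flux_lipschitz a b : Rabs (flux a - flux b) <= Lf * Rabs (a - b).
Proof.
  unfold flux. eapply Rle_trans; [apply HL; apply Rmax_r|].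
  pose proof (Rmax_l_1_lipschitz 0 a b). pose proof (Rabs_pos (Rmax a 0 - Rmax b 0)).
  apply Rle_trans with (Lf * Rabs (Rmax a 0 - Rmax b 0));
    [apply Rmult_le_compat_r; [auto | apply Rmax_l] | apply Rmult_le_compat_l; [apply Rmax_r | auto]].
Qed.

Lemma flux_shift_continuous (u : R -> R) r t :
  (forall t, continuous u t) -> continuous (fun s => flux (u (r - s))) t.
Proof.
  intros Hu. apply (continuous_Rcomp (fun s => u (r - s)) flux);
    [apply continuous_shift; auto | apply flux_continuous].
Qed.

Lemma rhs_continuous u : (forall t, continuous u t) -> forall t, continuous (rhs u) t.
Proof.
  intros Hu t. unfold rhs. apply continuous_Rplus; [apply continuous_Rminus|].
  - apply continuous_Rscal_l, Hu.
  - apply (continuous_Rcomp u flux); [apply Hu | apply flux_continuous].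
  - apply continuous_Rscal_l.
    apply (convolution_continuous _ _ _ kern_kernel ltac:(lra) (fun r => flux (u r))).
    intros; apply (continuous_Rcomp u flux); [apply Hu | apply flux_continuous].
Qed.

Lemma rhs_lipschitz u v r eps : (forall t, continuous u t) -> (forall t, continuous v t) ->
  (forall w, w <= r -> Rabs (u w - v w) <= eps) -> Rabs (rhs u r - rhs v r) <= Lam * eps.
Proof.
  intros Hu Hv Hw. pose proof mass_bounds.
  assert (HLf : 0 <= Lf) by apply Rmax_r.
  assert (He : 0 <= eps) by (apply Rle_trans with (Rabs (u r - v r)); [apply Rabs_pos | apply Hw; lra]).
  assert (Hconv : Rabs (RInt (fun s => kern s * flux (u (r - s))) tl tu
                        - RInt (fun s => kern s * flux (v (r - s))) tl tu) <= Lf * eps).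
  { rewrite <- RInt_Rminus by (apply (kernel_ex_RInt _ _ _ kern_kernel); intros;
                               apply flux_shift_continuous; auto).
    rewrite (RInt_Rext _ (fun s => kern s * (flux (u (r - s)) - flux (v (r - s))))) by (intros; ring).
    eapply Rle_trans; [apply (kernel_RInt_abs_le _ _ _ kern_kernel ltac:(lra) _ (Lf * eps))|].
    - intros; apply continuous_Rminus; apply flux_shift_continuous; auto.
    - intros s Hs. eapply Rle_trans; [apply flux_lipschitz|]. apply Rmult_le_compat_l; auto. apply Hw. lra.
    - fold mass. rewrite <- (Rmult_1_r (Lf * eps)) at 2.
      apply Rmult_le_compat_l; [apply Rmult_le_pos|]; lra. }
  assert (Hflux : Rabs (flux (u r) - flux (v r)) <= Lf * eps).
  { eapply Rle_trans; [apply flux_lipschitz | apply Rmult_le_compat_l; auto; apply Hw; lra]. }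
  assert (Hlin : Rabs (- d * (u r - v r)) <= d * eps).
  { rewrite Rabs_mult, Rabs_Ropp, (Rabs_right d) by lra. apply Rmult_le_compat_l; auto. apply Hw; lra. }
  unfold rhs, Lam.
  replace (- d * u r - flux (u r) + 2 * RInt (fun s => kern s * flux (u (r - s))) tl tu
           - (- d * v r - flux (v r) + 2 * RInt (fun s => kern s * flux (v (r - s))) tl tu))
    with (- d * (u r - v r) - (flux (u r) - flux (v r))
          + 2 * (RInt (fun s => kern s * flux (u (r - s))) tl tu
                 - RInt (fun s => kern s * flux (v (r - s))) tl tu)) by ring.
  eapply Rle_trans; [apply Rabs_triang|]. eapply Rle_trans; [apply Rplus_le_compat_r, Rabs_triang|].
  rewrite Rabs_Ropp, (Rabs_mult 2), (Rabs_right 2) by lra. lra.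
Qed.

Lemma rhs_zero r : rhs (fun _ => 0) r = 0.
Proof.
  unfold rhs. rewrite flux_of_nonpos, (kernel_RInt_const _ _ _ kern_kernel) by lra. ring.
Qed.

Let HLam : 0 <= Lam.
Proof. pose proof (Rmax_r L 0). unfold Lam, Lf. lra. Qed.

Section Seed.
Variable c : R.
Hypothesis Hc : 0 < c.
Let Hc0 : 0 <= c := Rlt_le _ _ Hc.

(* The solution with constant history [x = c] on [[-tu, 0]]. *)
Definition seed := picard_limit rhs c.

Lemma seed_continuous t : continuous seed t.
Proof. exact (picard_limit_continuous rhs Lam c HLam Hc0 rhs_continuous rhs_lipschitz rhs_zero t). Qed.

Lemma seed_derive t : 0 < t -> is_derive seed t (rhs seed t).
Proof. exact (picard_limit_derive rhs Lam c HLam Hc0 rhs_continuous rhs_lipschitz rhs_zero t). Qed.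

Lemma seed_nonpos t : t <= 0 -> seed t = c.
Proof. apply picard_limit_nonpos. Qed.

Lemma seed_nonneg t : 0 <= seed t.
Proof.
  apply (nonneg_of_derive_nonneg_at_neg seed (rhs seed));
    [apply seed_continuous | intros; rewrite seed_nonpos; lra | apply seed_derive |].
  intros u _ Hneg. unfold rhs. rewrite flux_of_nonpos by lra.
  assert (0 <= RInt (fun s => kern s * flux (seed (u - s))) tl tu).
  { apply (kernel_RInt_ge0_mult _ _ _ kern_kernel ltac:(lra)); [|intros; apply flux_nonneg].
    intros; apply flux_shift_continuous, seed_continuous. }
  nra.
Qed.

Lemma seed_trajectory : trajectory seed.
Proof.
  split; [intros; apply seed_nonneg|].
  intros t _. apply continuous_within_of_continuous, seed_continuous.
Qed.

Lemma rhs_seed t : rhs seed t = - (d + beta (seed t)) * seed t + 2 * delayed_term tl tu g f beta seed t.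
Proof.
  unfold rhs, delayed_term. rewrite flux_of_nonneg by apply seed_nonneg.
  rewrite (RInt_Rext (fun s => kern s * flux (seed (t - s)))
             (fun s => exp (- g * s) * f s * (beta (seed (t - s)) * seed (t - s)))); [ring|].
  intros s _. unfold kern. rewrite flux_of_nonneg by apply seed_nonneg. ring.
Qed.

Definition seed_y (t : R) := yfun seed (Rmax t 0).

Lemma seed_y_continuous t : continuous seed_y t.
Proof.
  apply (continuous_Rcomp (fun t => Rmax t 0) (yfun seed)); [apply continuous_Rmax_l|].
  apply (continuous_of_is_derive _ _ _ (yfun_derive seed seed_trajectory _)).
Qed.

Lemma seed_solution : is_solution tl tu g d f beta seed seed_y.
Proof.
  split; [|split; [|split; [|split; [|split; [|split]]]]].
  - intros; apply seed_nonneg.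
  - intros t _. unfold seed_y.
    destruct (hist_bounded seed seed_trajectory (Rmax t 0 - tu) (Rmax t 0)) as [Q [_ HQ]]; [lra|].
    apply (yfun_bounds seed seed_trajectory _ Q HQ).
  - apply seed_trajectory.
  - intros t _. apply continuous_within_of_continuous, seed_y_continuous.
  - intros t Ht. rewrite <- rhs_seed. apply seed_derive, Ht.
  - intros t Ht. apply (is_derive_ext_loc (yfun seed)).
    + exists (mkposreal t Ht). intros u Hu. apply (proj1 (ball_R _ _ _)) in Hu. simpl in Hu.
      apply Rabs_def2 in Hu. unfold seed_y. rewrite Rmax_left by lra. reflexivity.
    + unfold seed_y. rewrite Rmax_left by lra.
      rewrite delayed_term_eq by (try apply seed_trajectory; lra).
      replace (beta (seed t) * seed t) with (rate seed t)
        by (rewrite rate_eq by (try apply seed_trajectory; lra); ring).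
      apply yfun_derive, seed_trajectory.
  - intros t Ht. unfold seed_y. rewrite Rmax_left by lra.
    symmetry. apply y_formula_eq_yfun; [apply seed_trajectory | lra].
Qed.

Lemma seed_history t : - tu <= t <= 0 -> seed t = c /\ 0 <= seed_y t <= tu * (beta 0 * c).
Proof.
  intros Ht. split; [apply seed_nonpos; lra|]. unfold seed_y. rewrite Rmax_right by lra.
  apply (yfun_bounds seed seed_trajectory 0 c). intros r Hr.
  apply hist_le_of_history; [|lra]. intros; rewrite seed_nonpos; lra.
Qed.

End Seed.

Lemma E0_unstable_of : d < (2 * mass - 1) * beta 0 -> E0_unstable tl tu g d f beta.
Proof.
  intros Hcond Hst. pose proof beta0_pos.
  assert (Htb : 0 <= tu * beta 0) by (apply Rmult_le_pos; lra).
  destruct (growth_rate_near_zero (((2 * mass - 1) * beta 0 - d) / 2)) as [eps0 [He0 Hgrowth]];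
    [lra|].
  destruct (Hst eps0 He0) as [eta [Heta Hstab]].
  set (c := eta / (2 * (1 + tu * beta 0))).
  assert (Hc : 0 < c) by (apply Rdiv_lt_0_compat; lra).
  assert (Hc2 : c * (2 * (1 + tu * beta 0)) = eta) by (unfold c; field; lra).
  apply (solution_escapes _ _ (seed_solution c Hc) (((2 * mass - 1) * beta 0 - d) / 2) eps0
           ltac:(lra) Hgrowth).
  - rewrite seed_nonpos; lra.
  - intros t Ht. destruct (Hstab _ _ (seed_solution c Hc)) with t as [Hx _]; auto.
    + intros s Hs. destruct (seed_history c Hc s Hs) as [-> Hy].
      rewrite !Rabs_right by lra. split; nra.
    + apply Rabs_def2 in Hx. lra.
Qed.

End Instability.

End Model.

Theorem theorem3p1 (tl tu g d : R) (f beta : R -> R)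
  (Htl : 0 <= tl) (Htlu : tl < tu) (Hg : 0 <= g) (Hd : 0 <= d)
  (Hf : pc_density f tl tu)
  (Hbpos : forall u, 0 <= u -> 0 < beta u)
  (Hbcont : forall u, 0 <= u ->
     filterlim beta (within (fun s => 0 <= s) (locally u)) (locally (beta u)))
  (Hbdec : forall u v, 0 <= u -> u <= v -> beta v <= beta u)
  (Hblim : is_lim beta p_infty 0)
  (Hblip : exists L, forall u v, 0 <= u -> 0 <= v ->
     Rabs (u * beta u - v * beta v) <= L * Rabs (u - v)) :
  ((2 * RInt (fun s => exp (- g * s) * f s) tl tu - 1) * beta 0 < d ->
     E0_GAS tl tu g d f beta) /\
  (d < (2 * RInt (fun s => exp (- g * s) * f s) tl tu - 1) * beta 0 ->
     E0_unstable tl tu g d f beta).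
Proof.
  destruct Hblip as [L HL].
  change (RInt (fun s => exp (- g * s) * f s) tl tu) with (mass tl tu g f).
  split; intros Hcond.
  - split.
    + apply E0_stable_of_sign; auto. apply sign_condition; auto.
    + apply E0_attractive_of; auto.
  - apply (E0_unstable_of tl tu g d f beta) with L; auto.
Qed.
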